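(* Let $A(t)$ be an $n\times n$ tridiagonal matrix-valued function on $\mathbb{R}$ with bounded, uniformly continuous entries and $a_{i,i+1}(t)\ge\varepsilon_0$, $a_{i+1,i}(t)\ge\varepsilon_0$ for all $t$, $1\le i\le n-1$, for some $\varepsilon_0>0$. Let $x(t)$ be a nontrivial solution of $\dot x=A(t)x$. Suppose there is a sequence $t_k\to\infty$ (or $t_k\to-\infty$) such that $x(t_k)\to x_*\ne 0$ and $A_{t_k}(t):=A(t+t_k)$ converges to a matrix function $A_*(t)$ uniformly on every compact interval of $\mathbb{R}$. Then the solution $x_*(t)$ of $\dot x=A_*(t)x$ with $x_*(0)=x_*$ satisfies $x_*(t)\in\Lambda$ for all $t\in\mathbb{R}$ and $\sigma(x_*(t))$ is constant in $t\in\mathbb{R}$.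
   Context: $\Lambda=\{x\in\mathbb{R}^n: x_1\ne0,\ x_n\ne 0,\ \text{and if } x_i=0 \text{ for some } 2\le i\le n-1 \text{ then } x_{i-1}x_{i+1}<0\}$. The function $\sigma:\Lambda\to\{0,1,\dots,n-1\}$ is $\sigma(x)=\#\{i: x_i=0 \text{ or } x_ix_{i+1}<0\}$. *)

(* classical reals. Vectors in R^n are functions nat -> R
   (only indices 0..n-1 matter); n x n matrices are nat -> nat -> R. *)
From Stdlib Require Import Reals Lra Lia.
Open Scope R_scope.

Fixpoint sumR (n : nat) (f : nat -> R) : R :=
  match n with
  | O => 0
  | S m => sumR m f + f m
  end.

Definition matvec (n : nat) (M : nat -> nat -> R) (v : nat -> R) (i : nat) : R :=
  sumR n (fun j => M i j * v j).

Definition is_solution (n : nat) (A : R -> nat -> nat -> R) (x : R -> nat -> R) : Prop :=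
  forall (t : R) (i : nat), (i < n)%nat ->
    derivable_pt_lim (fun s => x s i) t (matvec n (A t) (x t) i).

(* Lambda, with 0-based indices 0..n-1 *)
Definition in_Lambda (n : nat) (x : nat -> R) : Prop :=
  x 0%nat <> 0 /\ x (n - 1)%nat <> 0 /\
  (forall i : nat, (1 <= i)%nat -> (i + 1 < n)%nat ->
     x i = 0 -> x (i - 1)%nat * x (i + 1)%nat < 0).

Fixpoint sigma_aux (x : nat -> R) (k : nat) : nat :=
  match k with
  | O => O
  | S m => (sigma_aux x m +
            (if Req_EM_T (x m) 0 then 1
             else if Rlt_dec (x m * x (S m)) 0 then 1 else 0))%nat
  end.

(* sigma(x) = #{ i in 1..n : x_i = 0 or x_i x_{i+1} < 0 }; the index i = n
   (0-based n-1) has no successor and x_n <> 0 on Lambda, so only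
   0-based i < n-1 are counted. *)
Definition sigma_var (n : nat) (x : nat -> R) : nat := sigma_aux x (n - 1).

(** For [v] in R^n let [S^-(v)] / [S^+(v)] be the least / greatest number of
    sign changes of a sign pattern compatible with [v] (zero entries may take
    either sign).  Along a nontrivial solution of [x' = A(t) x], [A]
    tridiagonal with off-diagonal entries [>= eps > 0], two classical facts
    hold:
    - local drop: [S^+(x s) <= S^-(x t0)] for [s] slightly after [t0], and
      [S^+(x t0) <= S^-(x s)] for [s] slightly before [t0];
    - monotonicity: [S^-(x t)] is nonincreasing in [t].
    The forward drop comes from an expansion near [t0]: each entry of [x s]
    takes the sign of the nearest nonzero entry of [x t0], which forces the
    inequality combinatorially; the backward drop follows by time reversal
    and the duality [S^+(D v) = n - 1 - S^-(v)], [D = diag((-1)^j)].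

    For the limit solution [xstar], the translates [x (. + tk m)] converge to
    [xstar] (Gronwall).  If [S^-(xstar t0) >= k], openness of [S^- >= k] and
    monotonicity give [S^-(x (t + tk m)) >= k] for all [t] and large [m];
    closedness of [S^+ >= k] gives [S^+(xstar t) >= k], and the forward drop
    for [xstar] gives [S^-(xstar t) >= k].  Running this from [S^+] via the
    backward drop shows [S^+ = S^-] along [xstar], which means [xstar t] lies
    in [Lambda] with [sigma = S^-], and that [S^-(xstar t)] does not depend
    on [t]. *)

From Stdlib Require Import Reals Lra Lia Classical Bool Arith.
Open Scope R_scope.

(** * Sign changes: [S^-], [S^+], openness, closedness and duality *)

Definition bsign (b : bool) : R := if b then 1 else -1.

Lemma bsign_cases b : bsign b = 1 \/ bsign b = -1.
Proof. destruct b; simpl; auto. Qed.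

Definition compatible (n : nat) (c : nat -> bool) (v : nat -> R) : Prop :=
  forall j, (j < n)%nat -> 0 <= bsign (c j) * v j.

Fixpoint changes_from (c : nat -> bool) (i k : nat) : nat :=
  match k with
  | O => O
  | S k' => ((if Bool.eqb (c i) (c (S i)) then 0 else 1) + changes_from c (S i) k')%nat
  end.

Definition changes (n : nat) (c : nat -> bool) : nat := changes_from c 0 (n - 1).

(** [S^-(v) >= k]: every compatible pattern has at least [k] changes
    (zeros deleted, the minimal count). *)
Definition Smin_ge (n : nat) (v : nat -> R) (k : nat) : Prop :=
  forall c, compatible n c v -> (k <= changes n c)%nat.

(** [S^+(v) >= k]: some compatible pattern has at least [k] changes
    (zeros chosen freely, the maximal count). *)
Definition Smax_ge (n : nat) (v : nat -> R) (k : nat) : Prop :=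
  exists c, compatible n c v /\ (k <= changes n c)%nat.

Definition nonneg_bit (r : R) : bool := if Rle_dec 0 r then true else false.

Definition sign_pattern (v : nat -> R) : nat -> bool := fun j => nonneg_bit (v j).

Lemma bsign_nonneg_bit r : 0 <= bsign (nonneg_bit r) * r.
Proof. unfold nonneg_bit, bsign; destruct (Rle_dec 0 r); lra. Qed.

Lemma sign_pattern_compatible n v : compatible n (sign_pattern v) v.
Proof. intros j _; apply bsign_nonneg_bit. Qed.

Lemma Smin_Smax_ge n v k : Smin_ge n v k -> Smax_ge n v k.
Proof. intro H; exists (sign_pattern v); split;
  [apply sign_pattern_compatible| apply H, sign_pattern_compatible].
Qed.

Lemma changes_from_split c i a b : changes_from c i (a + b) = (changes_from c i a +
    changes_from c (i + a) b)%nat.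
Proof.
  revert i; induction a; intro i; simpl.
  - rewrite Nat.add_0_r; reflexivity.
  - rewrite IHa. replace (S i + a)%nat with (i + S a)%nat by lia. lia.
Qed.

Lemma changes_from_ext c c' i k : (forall j, (i <= j <= i + k)%nat -> c j = c' j) ->
  changes_from c i k = changes_from c' i k.
Proof.
  revert i; induction k; intros i H; simpl; auto.
  rewrite (H i) by lia. rewrite (H (S i)) by lia. rewrite (IHk (S i)); auto.
  intros j Hj; apply H; lia.
Qed.

Lemma changes_from_le c i k : (changes_from c i k <= k)%nat.
Proof. revert i; induction k; intro i; simpl; auto. specialize (IHk (S i)).
  destruct (Bool.eqb _ _); lia.
Qed.

Lemma changes_from_one c i : changes_from c i 1 = (if Bool.eqb (c i) (c (S i)) then 0 else 1)%nat.
Proof. simpl. lia. Qed.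

Lemma compatible_ext n c v v' : (forall j, (j < n)%nat -> v j = v' j) ->
  compatible n c v -> compatible n c v'.
Proof. intros E H j Hj; rewrite <- E by auto; auto. Qed.

Lemma compatible_ext_pattern n c c' v : (forall j, (j < n)%nat -> c j = c' j) ->
  compatible n c v -> compatible n c' v.
Proof. intros E H j Hj; rewrite <- E by auto; auto. Qed.

Lemma changes_ext n c c' : (forall j, (j < n)%nat -> c j = c' j) -> changes n c = changes n c'.
Proof.
  intro E; unfold changes. destruct n. reflexivity.
  apply changes_from_ext. intros j Hj; apply E; lia.
Qed.

Lemma Smin_ge_ext n v v' k : (forall j, (j < n)%nat -> v j = v' j) -> Smin_ge n v k ->
  Smin_ge n v' k.
Proof. intros E H c Hc; apply H; eapply compatible_ext; [|exact Hc]; intros; symmetry; auto. Qed.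

Lemma Smax_ge_ext n v v' k : (forall j, (j < n)%nat -> v j = v' j) -> Smax_ge n v k ->
  Smax_ge n v' k.
Proof. intros E [c [Hc Hk]]; exists c; split; auto; eapply compatible_ext; eauto. Qed.

(** Duality [S^+(D v) = n - 1 - S^-(v)], where [D] multiplies the [j]-th entry
    by [(-1)^j] ([alternate]) and flips the [j]-th bit of a pattern when [j]
    is odd ([flip_pattern]). *)
Definition flip_pattern (c : nat -> bool) : nat -> bool := fun j => xorb (c j) (Nat.odd j).
Definition alternate (v : nat -> R) : nat -> R := fun j => (-1) ^ j * v j.

Lemma pow_m1_sq j : (-1) ^ j * (-1) ^ j = 1.
Proof. rewrite <- Rpow_mult_distr. replace (-1 * -1) with 1 by lra. apply pow1. Qed.

Lemma bsign_flip_pattern c j : bsign (flip_pattern c j) = bsign (c j) * (-1) ^ j.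
Proof.
  unfold flip_pattern, bsign. induction j.
  - simpl. destruct (c 0%nat); simpl; lra.
  - rewrite Nat.odd_succ, <- Nat.negb_odd. simpl.
    destruct (c (S j)), (Nat.odd j); simpl in *.
    + destruct (c j); simpl in IHj; nra.
    + destruct (c j); simpl in IHj; nra.
    + destruct (c j); simpl in IHj; nra.
    + destruct (c j); simpl in IHj; nra.
Qed.

Lemma compatible_alternate n c v : compatible n c (alternate v) <-> compatible n (flip_pattern c) v.
Proof.
  split; intros H j Hj; specialize (H j Hj); unfold alternate in *;
  rewrite ?bsign_flip_pattern in *.
  - replace (bsign (c j) * (-1) ^ j * v j) with (bsign (c j) * ((-1) ^ j * v j)) by ring; auto.
  - replace (bsign (c j) * ((-1) ^ j * v j)) with (bsign (c j) * (-1) ^ j * v j) by ring; auto.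
Qed.

(** Flipping every other bit exchanges changes and non-changes. *)
Lemma changes_from_flip c i k : (changes_from (flip_pattern c) i k + changes_from c i k)%nat = k.
Proof.
  revert i; induction k; intro i; simpl; auto.
  specialize (IHk (S i)). unfold flip_pattern at 1 2. rewrite Nat.odd_succ, <- Nat.negb_odd.
  destruct (c i), (c (S i)), (Nat.odd i); simpl; lia.
Qed.

Lemma changes_flip n c : (changes n (flip_pattern c) + changes n c)%nat = (n - 1)%nat.
Proof. apply changes_from_flip. Qed.

Lemma changes_le n c : (changes n c <= n - 1)%nat.
Proof. apply changes_from_le. Qed.

Lemma flip_pattern_involutive c j : flip_pattern (flip_pattern c) j = c j.
Proof. unfold flip_pattern. destruct (c j), (Nat.odd j); reflexivity. Qed.

Lemma alternate_involutive v j : alternate (alternate v) j = v j.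
Proof. unfold alternate. rewrite <- Rmult_assoc, pow_m1_sq. ring. Qed.

Lemma Smax_alternate_not_Smin n v k : (1 <= n)%nat -> Smax_ge n (alternate v) k ->
  ~ Smin_ge n v (n - k).
Proof.
  intros Hn [c [Hc Hk]] HA. apply compatible_alternate in Hc. specialize (HA _ Hc).
  pose proof (changes_flip n c). pose proof (changes_le n c). lia.
Qed.

Lemma not_Smin_Smax_alternate n v k : ~ Smin_ge n v (n - k) -> Smax_ge n (alternate v) k.
Proof.
  intro H. unfold Smin_ge in H.
  apply not_all_ex_not in H as [c Hc].
  apply imply_to_and in Hc as [Hc Hk].
  exists (flip_pattern c). split.
  - apply compatible_alternate. eapply compatible_ext_pattern; [|exact Hc]. intros; symmetry;
    apply flip_pattern_involutive.
  - pose proof (changes_flip n c). lia.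
Qed.

Lemma Smax_not_Smin_alternate n w k : (1 <= n)%nat -> Smax_ge n w k ->
  ~ Smin_ge n (alternate w) (n - k).
Proof.
  intros Hn H. apply Smax_alternate_not_Smin; auto. eapply Smax_ge_ext; [|exact H]. intros;
  symmetry; apply alternate_involutive.
Qed.

Lemma not_Smax_alternate_Smin n w k : (k <= n)%nat -> ~ Smax_ge n (alternate w) (n - k) ->
  Smin_ge n w k.
Proof.
  intros Hk H. apply NNPP; intro H'. apply H. apply not_Smin_Smax_alternate.
  replace (n - (n - k))%nat with k by lia. exact H'.
Qed.

Fixpoint min_nonzero_abs (v : nat -> R) (k : nat) : R :=
  match k with
  | O => 1
  | S k' => Rmin (min_nonzero_abs v k') (if Req_EM_T (v k') 0 then 1 else Rabs (v k'))
  end.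

Lemma min_nonzero_abs_pos v k : 0 < min_nonzero_abs v k.
Proof.
  induction k; simpl. lra. apply Rmin_glb_lt; auto.
  destruct (Req_EM_T (v k) 0). lra. apply Rabs_pos_lt; auto.
Qed.

Lemma min_nonzero_abs_le v k j : (j < k)%nat -> v j <> 0 -> min_nonzero_abs v k <= Rabs (v j).
Proof.
  induction k; intros Hj Hv. lia. simpl.
  destruct (Nat.eq_dec j k). subst. destruct (Req_EM_T (v k) 0). contradiction.
  apply Rmin_r.
  eapply Rle_trans. apply Rmin_l. apply IHk; auto; lia.
Qed.

(** [S^-(v) >= k] is an open condition on [v]: nonzero entries keep their sign
    under small perturbations. *)
Lemma Smin_ge_open n v k : Smin_ge n v k -> exists eta, 0 < eta /\
  forall w, (forall j, (j < n)%nat -> Rabs (w j - v j) < eta) -> Smin_ge n w k.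
Proof.
  intro H. exists (min_nonzero_abs v n). split. apply min_nonzero_abs_pos.
  intros w Hw c Hc. apply H. intros j Hj.
  destruct (Req_EM_T (v j) 0) as [E|E]. rewrite E; lra.
  pose proof (min_nonzero_abs_le v n j Hj E). specialize (Hw j Hj). specialize (Hc j Hj).
  destruct (bsign_cases (c j)) as [S|S]; rewrite S in *;
  revert Hw H0; unfold Rabs; repeat destruct Rcase_abs; intros; nra.
Qed.

Definition set_bit (c : nat -> bool) (n : nat) (b : bool) : nat -> bool :=
  fun j => if Nat.eqb j n then b else c j.

Lemma frequent_pattern n : forall (R0 : nat -> (nat -> bool) -> Prop),
  (forall m c c', (forall j, (j < n)%nat -> c j = c' j) -> R0 m c -> R0 m c') ->
  (forall M, exists m, (M <= m)%nat /\ exists c, R0 m c) ->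
  exists c, forall M, exists m, (M <= m)%nat /\ R0 m c.
Proof.
  induction n; intros R0 Hext H.
  - exists (fun _ => true). intro M. destruct (H M) as [m [Hm [c Hc]]].
    exists m; split; auto. eapply Hext; [|exact Hc]. intros; lia.
  - set (R1 := fun m c => R0 m (set_bit c n true)).
    set (R2 := fun m c => R0 m (set_bit c n false)).
    assert (E1 : forall m c c', (forall j, (j < n)%nat -> c j = c' j) -> R1 m c -> R1 m c').
    { intros m c c' E; unfold R1; apply Hext. intros j Hj; unfold set_bit.
      destruct (Nat.eqb_spec j n); auto. apply E; lia. }
    assert (E2 : forall m c c', (forall j, (j < n)%nat -> c j = c' j) -> R2 m c -> R2 m c').
    { intros m c c' E; unfold R2; apply Hext. intros j Hj; unfold set_bit.
      destruct (Nat.eqb_spec j n); auto. apply E; lia. }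
    assert (Hsplit : forall m c, R0 m c -> R1 m c \/ R2 m c).
    { intros m c Hc. destruct (c n) eqn:Ecn; [left|right]; (eapply Hext; [|exact Hc]);
      intros j Hj; unfold set_bit; destruct (Nat.eqb_spec j n); subst; auto. }
    destruct (classic (forall M, exists m, (M <= m)%nat /\ exists c, R1 m c)) as [F|F].
    + destruct (IHn R1 E1 F) as [c Hc]. exists (set_bit c n true). exact Hc.
    + apply not_all_ex_not in F as [M0 HM0].
      assert (Hfreq2 : forall M, exists m, (M <= m)%nat /\ exists c, R2 m c).
      { intro M. destruct (H (Nat.max M M0)) as [m [Hm [c Hc]]].
        exists m. split. lia. destruct (Hsplit m c Hc) as [h|h].
        - exfalso. apply HM0. exists m. split. lia. exists c; auto.
        - exists c; auto. }
      destruct (IHn R2 E2 Hfreq2) as [c Hc]. exists (set_bit c n false). exact Hc.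
Qed.

Lemma Smax_ge_closed n (y : nat -> nat -> R) v k :
  (forall M, exists m, (M <= m)%nat /\ Smax_ge n (y m) k) ->
  (forall j, (j < n)%nat -> Un_cv (fun m => y m j) (v j)) ->
  Smax_ge n v k.
Proof.
  intros H Hcv.
  destruct (frequent_pattern n (fun m c => compatible n c (y m) /\ (k <= changes n c)%nat)) as
      [c Hc].
  - intros m c c' E [h1 h2]. split. eapply compatible_ext_pattern; eauto.
    rewrite <- (changes_ext n c c'); auto.
  - intro M. destruct (H M) as [m [Hm [c Hc]]]. exists m; split; auto. exists c; auto.
  - exists c. split.
    + intros j Hj. apply Rnot_lt_le. intro Hneg.
      destruct (Hcv j Hj (- (bsign (c j) * v j))) as [N HN]. lra.
      destruct (Hc N) as [m [Hm [Hcm _]]]. specialize (Hcm j Hj). specialize (HN m Hm).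
      unfold R_dist in HN.
      destruct (bsign_cases (c j)) as [S|S]; rewrite S in *;
      revert HN; unfold Rabs; repeat destruct Rcase_abs; intros; nra.
    + destruct (Hc 0%nat) as [m [_ [_ Hk]]]. exact Hk.
Qed.

Lemma changes_unique n v : (forall k, Smax_ge n v k -> Smin_ge n v k) ->
  forall c1 c2, compatible n c1 v -> compatible n c2 v -> changes n c1 = changes n c2.
Proof.
  intros H c1 c2 H1 H2.
  assert (A1 : (changes n c1 <= changes n c2)%nat).
  { apply (H (changes n c1)); auto. exists c1; auto. }
  assert (A2 : (changes n c2 <= changes n c1)%nat).
  { apply (H (changes n c2)); auto. exists c2; auto. }
  lia.
Qed.

Lemma compatible_set_bit_zero n c v i b : v i = 0 -> compatible n c v ->
  compatible n (set_bit c i b) v.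
Proof.
  intros Hv H j Hj. unfold set_bit. destruct (Nat.eqb_spec j i). subst. rewrite Hv; lra. auto.
Qed.

Lemma eqb_comm b c : Bool.eqb b c = Bool.eqb c b.
Proof. destruct b, c; reflexivity. Qed.

Lemma eqb_negb_l b c : Bool.eqb (negb b) c = negb (Bool.eqb b c).
Proof. destruct b, c; reflexivity. Qed.

(** If all sign patterns compatible with [v] have the same number of changes,
    then [v] lies in [Lambda]: a zero at an end, or a zero between two entries
    of equal weak sign, could be given either sign, changing the count. *)
Section UniqueChanges.
Variables (n : nat) (v : nat -> R).
Hypothesis Hnz : exists i, (i < n)%nat /\ v i <> 0.
Hypothesis U : forall c1 c2, compatible n c1 v -> compatible n c2 v -> changes n c1 = changes n c2.

Let c := sign_pattern v.
Let Hc : compatible n c v := sign_pattern_compatible n v.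

Lemma unique_changes_first : v 0%nat <> 0.
Proof.
  intro E. destruct Hnz as [i0 [Hi0 Hv0]].
  destruct (Nat.eq_dec n 1). { replace i0 with 0%nat in Hv0 by lia. auto. }
  set (c' := set_bit c 0 (negb (c 0%nat))).
  assert (Hc' : compatible n c' v) by (apply compatible_set_bit_zero; auto).
  specialize (U _ _ Hc Hc'). unfold changes in U.
  replace (n - 1)%nat with (1 + (n - 2))%nat in U by lia.
  rewrite !changes_from_split, !changes_from_one in U.
  rewrite (changes_from_ext c' c) in U.
  - unfold c' in U. unfold set_bit in U at 1 2. simpl in U.
    rewrite eqb_negb_l in U. destruct (Bool.eqb (c 0%nat) (c 1%nat)); simpl in U; lia.
  - intros j Hj. unfold c', set_bit. destruct (Nat.eqb_spec j 0); auto; lia.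
Qed.

Lemma unique_changes_last : v (n - 1)%nat <> 0.
Proof.
  intro E. destruct Hnz as [i0 [Hi0 Hv0]].
  destruct (Nat.eq_dec n 1). { replace i0 with 0%nat in Hv0 by lia. rewrite e in E. auto. }
  set (c' := set_bit c (n-1) (negb (c (n-1)%nat))).
  assert (Hc' : compatible n c' v) by (apply compatible_set_bit_zero; auto).
  specialize (U _ _ Hc Hc'). unfold changes in U.
  replace (n - 1)%nat with ((n - 2) + 1)%nat in U by lia.
  rewrite !changes_from_split, !changes_from_one in U.
  rewrite (changes_from_ext c' c 0) in U.
  - replace (S (0 + (n - 2))) with (n - 1)%nat in U by lia.
    replace (0 + (n - 2))%nat with (n - 2)%nat in U by lia.
    unfold c' in U. unfold set_bit in U.
    rewrite (proj2 (Nat.eqb_neq (n-2) (n-1))) in U by lia.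
    rewrite Nat.eqb_refl in U.
    rewrite (eqb_comm (c (n-2)%nat) (negb _)), eqb_negb_l, (eqb_comm (c (n-1)%nat)) in U.
    destruct (Bool.eqb (c (n-2)%nat) (c (n-1)%nat)); simpl in U; lia.
  - intros j Hj. unfold c', set_bit. destruct (Nat.eqb_spec j (n-1)); auto; lia.
Qed.

Lemma equal_neighbour_pattern i : (1 <= i)%nat -> (i + 1 < n)%nat ->
  0 <= v (i - 1)%nat * v (i + 1)%nat ->
  exists c2, compatible n c2 v /\ c2 (i - 1)%nat = c2 (i + 1)%nat.
Proof.
  intros Hi1 Hi2 Hge. destruct (Req_EM_T (v (i-1)%nat) 0) as [Z|Z].
  - exists (set_bit c (i-1) (c (i+1)%nat)). split; [apply compatible_set_bit_zero; auto|].
    unfold set_bit. rewrite Nat.eqb_refl. rewrite (proj2 (Nat.eqb_neq (i+1) (i-1))) by lia. auto.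
  - destruct (Req_EM_T (v (i+1)%nat) 0) as [Z'|Z'].
    + exists (set_bit c (i+1) (c (i-1)%nat)). split; [apply compatible_set_bit_zero; auto|].
      unfold set_bit. rewrite Nat.eqb_refl. rewrite (proj2 (Nat.eqb_neq (i-1) (i+1))) by lia. auto.
    + exists c. split; auto. unfold c, sign_pattern, nonneg_bit.
      destruct (Rle_dec 0 (v (i-1)%nat)), (Rle_dec 0 (v (i+1)%nat)); auto; exfalso.
      * assert (0 < v (i-1)%nat) by lra. assert (v (i+1)%nat < 0) by lra. nra.
      * assert (0 < v (i+1)%nat) by lra. assert (v (i-1)%nat < 0) by lra. nra.
Qed.

Lemma unique_changes_interior i : (1 <= i)%nat -> (i + 1 < n)%nat -> v i = 0 ->
  v (i - 1)%nat * v (i + 1)%nat < 0.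
Proof.
  intros Hi1 Hi2 Ei. apply Rnot_le_lt. intro Hge.
  destruct (equal_neighbour_pattern i Hi1 Hi2 Hge) as [c2 [Hc2 Heq]].
  set (c3 := set_bit c2 i (negb (c2 i))).
  assert (Hc3 : compatible n c3 v) by (apply compatible_set_bit_zero; auto).
  specialize (U _ _ Hc2 Hc3). unfold changes in U.
  replace (n - 1)%nat with ((i - 1) + (2 + (n - 2 - i)))%nat in U by lia.
  rewrite !changes_from_split in U.
  rewrite (changes_from_ext c3 c2 0 (i-1)) in U.
  rewrite (changes_from_ext c3 c2 (0 + (i - 1) + 2) (n-2-i)) in U.
  replace (i - 1 + 2)%nat with (S i) in U by lia.
  replace (0 + (i - 1))%nat with (i - 1)%nat in U by lia.
  simpl in U. replace (S (i - 1)) with i in U by lia.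
  unfold c3, set_bit in U. rewrite Nat.eqb_refl in U.
  rewrite (proj2 (Nat.eqb_neq (i-1) i)) in U by lia.
  rewrite (proj2 (Nat.eqb_neq (S i) i)) in U by lia.
  replace (S i) with (i + 1)%nat in U by lia. rewrite <- Heq in U.
  rewrite (eqb_comm (c2 (i-1)%nat) (negb _)), eqb_negb_l in U.
  rewrite (eqb_comm (c2 (i-1)%nat) (c2 i)) in U.
  destruct (Bool.eqb (c2 i) (c2 (i-1)%nat)); simpl in U; lia.
  all: intros j Hj; unfold c3, set_bit; destruct (Nat.eqb_spec j i); auto; lia.
Qed.

Lemma in_Lambda_of_changes_unique : in_Lambda n v.
Proof.
  split; [exact unique_changes_first|]. split; [exact unique_changes_last|].
  exact unique_changes_interior.
Qed.
End UniqueChanges.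

Definition lambda_pattern (v : nat -> R) : nat -> bool :=
  fun j => if Req_EM_T (v j) 0 then nonneg_bit (v (j - 1)%nat) else nonneg_bit (v j).

Lemma nonneg_bit_eqb r r' : r <> 0 -> r' <> 0 ->
  (Bool.eqb (nonneg_bit r) (nonneg_bit r') = true <-> 0 < r * r').
Proof.
  intros H H'. unfold nonneg_bit. destruct (Rle_dec 0 r), (Rle_dec 0 r'); simpl; split; intro;
  try discriminate; auto.
  - assert (0 < r) by lra. assert (0 < r') by lra. nra.
  - assert (0 < r) by lra. assert (r' < 0) by lra. nra.
  - assert (r < 0) by lra. assert (0 < r') by lra. nra.
  - assert (r < 0) by lra. assert (r' < 0) by lra. nra.
Qed.

Lemma lambda_pattern_changes n v : in_Lambda n v -> compatible n (lambda_pattern v) v /\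
  changes n (lambda_pattern v) = sigma_var n v.
Proof.
  intros [H0 [H1 H2]]. split.
  - intros j Hj. unfold lambda_pattern. destruct (Req_EM_T (v j) 0) as [E|E]. rewrite E; lra.
    apply bsign_nonneg_bit.
  - unfold changes, sigma_var.
    assert (forall k, (k <= n - 1)%nat -> changes_from (lambda_pattern v) 0 k = sigma_aux v k);
    [|auto].
    induction k; intro Hk. reflexivity.
    replace (S k) with (k + 1)%nat by lia. rewrite changes_from_split, changes_from_one.
    replace (k + 1)%nat with (S k) by lia. simpl. rewrite IHk by lia. f_equal.
    unfold lambda_pattern.
    destruct (Req_EM_T (v k) 0) as [Ek|Ek].
    + assert (k <> 0%nat) by (intro; subst; auto).
      assert (Hm := H2 k ltac:(lia) ltac:(lia) Ek). replace (k+1)%nat with (S k) in Hm by lia.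
      destruct (Req_EM_T (v (S k)) 0) as [E2|E2]. rewrite E2 in Hm; lra.
      destruct (Bool.eqb (nonneg_bit (v (k-1)%nat)) (nonneg_bit (v (S k)))) eqn:B; auto.
      apply nonneg_bit_eqb in B; [lra| |auto]. intro Z; rewrite Z in Hm; lra.
    + destruct (Req_EM_T (v (S k)) 0) as [E2|E2].
      * replace (S k - 1)%nat with k by lia. rewrite Bool.eqb_reflx.
        destruct (Rlt_dec (v k * v (S k)) 0); auto. rewrite E2 in r; lra.
      * destruct (Bool.eqb (nonneg_bit (v k)) (nonneg_bit (v (S k)))) eqn:B.
        -- apply nonneg_bit_eqb in B; auto. destruct (Rlt_dec (v k * v (S k)) 0); auto; lra.
        -- destruct (Rlt_dec (v k * v (S k)) 0); auto. exfalso.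
           assert (0 < v k * v (S k)) by (assert (v k * v (S k) <> 0) by (apply
               Rmult_integral_contrapositive; auto); lra).
           apply (nonneg_bit_eqb _ _ Ek E2) in H. rewrite H in B; discriminate.
Qed.

Fixpoint left_nz (u : nat -> R) (i : nat) : nat :=
  match i with O => O | S i' => if Req_EM_T (u (S i')) 0 then left_nz u i' else S i' end.

Fixpoint right_nz_from (u : nat -> R) (f i : nat) : nat :=
  match f with O => i | S f' => if Req_EM_T (u i) 0 then right_nz_from u f' (S i) else i end.

Definition right_nz n u i := right_nz_from u (n - i) i.
Definition has_left_nz u i : bool := if Req_EM_T (u (left_nz u i)) 0 then false else true.

(** Distances from [i] to the nearest nonzero entry on the left / on the right;
    [n] stands for infinity (no nonzero entry on that side). *)
Definition dist_left n u i : nat := if has_left_nz u i then (i - left_nz u i)%nat else n.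
Definition dist_right n u i : nat := if (right_nz n u i <? n)%nat then (right_nz n u i - i)%nat
    else n.

Lemma left_nz_le u i : (left_nz u i <= i)%nat.
Proof. induction i; simpl; auto. destruct Req_EM_T; lia. Qed.
Lemma left_nz_self u i : u i <> 0 -> left_nz u i = i.
Proof. destruct i; simpl; auto. destruct Req_EM_T; auto; contradiction. Qed.
Lemma left_nz_zero_step u i : u (S i) = 0 -> left_nz u (S i) = left_nz u i.
Proof. simpl. destruct Req_EM_T; auto; contradiction. Qed.
Lemma left_nz_ge u i j : (j <= i)%nat -> u j <> 0 -> (j <= left_nz u i)%nat.
Proof.
  induction i; intros Hj Hu. replace j with 0%nat by lia. simpl; lia.
  destruct (Nat.eq_dec j (S i)). subst. rewrite left_nz_self; auto.
  simpl. destruct Req_EM_T. apply IHi; auto; lia. lia.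
Qed.
Lemma left_nz_mono u i i' : (i <= i')%nat -> (left_nz u i <= left_nz u i')%nat.
Proof.
  intro H. induction H. lia. simpl. destruct Req_EM_T. auto. pose proof (left_nz_le u m); lia.
Qed.
Lemma no_left_nz u i : u (left_nz u i) = 0 -> forall j, (j <= i)%nat -> u j = 0.
Proof.
  intros H j Hj. apply NNPP; intro Hn. pose proof (left_nz_ge u i j Hj Hn).
  pose proof (left_nz_le u i).
  revert H H0 H1. clear Hj. revert j Hn. induction i; intros j Hn H H0 H1.
  simpl in *. replace j with 0%nat in * by lia. contradiction.
  simpl in H, H0. destruct Req_EM_T in H, H0.
  - destruct (Nat.eq_dec j (S i)). subst. contradiction.
    eapply IHi; eauto. apply left_nz_le.
  - contradiction.
Qed.
Lemma left_nz_over_zeros u i i' : (i <= i')%nat -> (forall j, (i < j <= i')%nat -> u j = 0) ->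
  left_nz u i' = left_nz u i.
Proof.
  intros H. induction H; intro Z; auto. rewrite left_nz_zero_step. apply IHle. intros; apply Z; lia.
  apply Z; lia.
Qed.

Lemma right_nz_from_ge u f i : (i <= right_nz_from u f i)%nat.
Proof. revert i; induction f; intro i; simpl; auto. destruct Req_EM_T; auto.
  specialize (IHf (S i)); lia.
Qed.
Lemma right_nz_from_le u f i : (right_nz_from u f i <= i + f)%nat.
Proof. revert i; induction f; intro i; simpl; try lia. destruct Req_EM_T; try lia.
  specialize (IHf (S i)); lia.
Qed.
Lemma right_nz_from_nonzero u f i : (right_nz_from u f i < i + f)%nat ->
  u (right_nz_from u f i) <> 0.
Proof.
  revert i; induction f; intros i H; simpl in *. lia.
  destruct Req_EM_T; auto. apply IHf. lia.
Qed.
Lemma right_nz_from_zeros u f i j : (i <= j < right_nz_from u f i)%nat -> u j = 0.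
Proof.
  revert i; induction f; intros i H; simpl in *. lia.
  destruct Req_EM_T. destruct (Nat.eq_dec i j). subst; auto. apply (IHf (S i)); lia. lia.
Qed.
Lemma right_nz_from_first u f i j : (i <= j < i + f)%nat -> u j <> 0 ->
  (right_nz_from u f i <= j)%nat.
Proof.
  revert i; induction f; intros i H Hu; simpl in *. lia.
  destruct Req_EM_T. destruct (Nat.eq_dec i j). subst; contradiction. apply IHf; auto; lia. lia.
Qed.

Section RightNearest.
Variable n : nat.
Variable u : nat -> R.
Lemma right_nz_ge i : (i <= right_nz n u i)%nat.
Proof. apply right_nz_from_ge. Qed.
Lemma right_nz_le_n i : (i <= n)%nat -> (right_nz n u i <= n)%nat.
Proof. intro; pose proof (right_nz_from_le u (n - i) i); unfold right_nz; lia. Qed.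
Lemma right_nz_nonzero i : (right_nz n u i < n)%nat -> u (right_nz n u i) <> 0.
Proof. intro H. apply right_nz_from_nonzero. unfold right_nz in H.
  pose proof (right_nz_from_ge u (n-i) i). lia.
Qed.
Lemma right_nz_zeros i j : (i <= j < right_nz n u i)%nat -> u j = 0.
Proof. apply right_nz_from_zeros. Qed.
Lemma right_nz_first i j : (i <= j < n)%nat -> u j <> 0 -> (right_nz n u i <= j)%nat.
Proof. intros; apply right_nz_from_first; auto; lia. Qed.
Lemma right_nz_self i : (i < n)%nat -> u i <> 0 -> right_nz n u i = i.
Proof. intros. pose proof (right_nz_first i i ltac:(lia) H0). pose proof (right_nz_ge i). lia. Qed.
Lemma right_nz_mono i i' : (i <= i' <= n)%nat -> (right_nz n u i <= right_nz n u i')%nat.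
Proof.
  intros H. destruct (le_lt_dec (right_nz n u i) i'). pose proof (right_nz_ge i'). lia.
  destruct (Nat.lt_ge_cases (right_nz n u i') n).
  apply right_nz_first. pose proof (right_nz_ge i'); lia. apply right_nz_nonzero; auto.
  pose proof (right_nz_le_n i); lia.
Qed.
Lemma right_nz_over_zeros i i' : (i <= i' <= n)%nat -> (forall j, (i <= j < i')%nat -> u j = 0) ->
  right_nz n u i = right_nz n u i'.
Proof.
  intros H Z. apply Nat.le_antisymm. apply right_nz_mono; auto.
  destruct (Nat.lt_ge_cases (right_nz n u i) n).
  - assert (Hi' : (i' <= right_nz n u i)%nat).
    { destruct (le_lt_dec i' (right_nz n u i)); auto. exfalso. apply (right_nz_nonzero i H0).
      apply Z. pose proof (right_nz_ge i). lia. }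
    apply right_nz_first; auto. apply right_nz_nonzero; auto.
  - pose proof (right_nz_le_n i' ltac:(lia)); lia.
Qed.
Lemma no_right_nz i : (n <= right_nz n u i)%nat -> forall j, (i <= j < n)%nat -> u j = 0.
Proof. intros H j Hj. apply (right_nz_zeros i). lia. Qed.
Lemma right_nz_zero_step i : (i < n)%nat -> u i = 0 -> right_nz n u i = right_nz n u (S i).
Proof. intros; apply right_nz_over_zeros. lia. intros j Hj; replace j with i by lia; auto. Qed.
End RightNearest.

Lemma dist_left_le n u i : (i < n)%nat -> (dist_left n u i <= n)%nat.
Proof. intro; unfold dist_left; destruct has_left_nz; lia. Qed.
Lemma dist_right_le n u i : (i <= n)%nat -> (dist_right n u i <= n)%nat.
Proof. intro; unfold dist_right; destruct (Nat.ltb_spec (right_nz n u i) n); lia. Qed.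
Lemma dist_left_finite n u i : (i < n)%nat -> (dist_left n u i < n)%nat -> u (left_nz u i) <> 0 /\
  dist_left n u i = (i - left_nz u i)%nat.
Proof. unfold dist_left, has_left_nz. destruct Req_EM_T; intros; try lia; auto. Qed.
Lemma dist_right_finite n u i : (dist_right n u i < n)%nat -> (right_nz n u i < n)%nat /\
  dist_right n u i = (right_nz n u i - i)%nat.
Proof. unfold dist_right. destruct (Nat.ltb_spec (right_nz n u i) n); intros; try lia; auto. Qed.

Lemma dist_not_both_infinite n u i : (exists j, (j < n)%nat /\ u j <> 0) -> (i < n)%nat ->
  (dist_left n u i < n)%nat \/ (dist_right n u i < n)%nat.
Proof.
  intros [j [Hj Hu]] Hi. unfold dist_left, dist_right, has_left_nz.
  destruct (Req_EM_T (u (left_nz u i)) 0) as [E|E]; [|left; pose proof (left_nz_le u i); lia].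
  destruct (Nat.ltb_spec (right_nz n u i) n) as [h|h]; [right; pose proof (right_nz_ge n u i);
  lia|].
  exfalso. destruct (le_lt_dec j i).
  - apply Hu. eapply no_left_nz; eauto.
  - apply Hu. eapply no_right_nz; eauto. lia.
Qed.

(** * The nearest-sign property forces [S^+(v) <= S^-(u)] *)

(** This is what the solution looks like
    just after a time where it equals [u]. *)
Definition nearest_sign n (u v : nat -> R) : Prop := forall i, (i < n)%nat ->
  ((dist_left n u i < dist_right n u i)%nat -> 0 < u (left_nz u i) * v i) /\
  ((dist_right n u i < dist_left n u i)%nat -> 0 < u (right_nz n u i) * v i) /\
  (dist_left n u i = dist_right n u i -> 0 < u (left_nz u i) * u (right_nz n u i) ->
  0 < u (left_nz u i) * v i).

Definition witness n u i b : nat :=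
  if Rlt_dec 0 (bsign b * u (left_nz u i)) then
    (if Nat.leb (dist_left n u i) (dist_right n u i) then left_nz u i else right_nz n u i)
  else right_nz n u i.

Lemma bsign_transfer b w a : 0 <= bsign b * w -> 0 < a * w -> 0 < bsign b * a.
Proof. intros H1 H2. destruct (bsign_cases b) as [S|S]; rewrite S in *; nra. Qed.

Lemma bsign_other b a r : a <> 0 -> r <> 0 -> ~ 0 < bsign b * a -> ~ 0 < a * r ->
  0 < bsign b * r.
Proof.
  intros Ha Hr H1 H2. assert (a * r <> 0) by (apply Rmult_integral_contrapositive; auto).
  destruct (bsign_cases b) as [S|S]; rewrite S in *; nra.
Qed.

Lemma bsign_negb b : bsign (negb b) = - bsign b.
Proof. destruct b; simpl; lra. Qed.

Section NearestSign.
Variable n : nat.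
Variables u v : nat -> R.
Hypothesis Hu : exists j, (j < n)%nat /\ u j <> 0.
Hypothesis HF : nearest_sign n u v.

Lemma witness_sign i b : (i < n)%nat -> 0 <= bsign b * v i ->
  (witness n u i b < n)%nat /\ 0 < bsign b * u (witness n u i b).
Proof.
  intros Hi Hv. destruct (HF i Hi) as [Fleft [Fright Fequal]].
  pose proof (dist_left_le n u i Hi). pose proof (dist_right_le n u i ltac:(lia)).
  unfold witness. destruct (Rlt_dec 0 (bsign b * u (left_nz u i))) as [C|C].
  - destruct (Nat.leb_spec (dist_left n u i) (dist_right n u i)).
    + split; auto. pose proof (left_nz_le u i); lia.
    + destruct (dist_right_finite n u i ltac:(lia)). split; auto.
      eapply bsign_transfer; eauto.
  - destruct (lt_eq_lt_dec (dist_left n u i) (dist_right n u i)) as [[h|h]|h].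
    + exfalso. apply C. eapply bsign_transfer; eauto.
    + assert (HR : (dist_right n u i < n)%nat)
        by (destruct (dist_not_both_infinite n u i Hu Hi); lia).
      destruct (dist_right_finite n u i HR) as [h1 _].
      destruct (dist_left_finite n u i Hi ltac:(lia)) as [h3 _].
      split; auto. apply (bsign_other b (u (left_nz u i))); auto.
      * apply right_nz_nonzero; auto.
      * intro P. apply C. eapply bsign_transfer; eauto.
    + destruct (dist_right_finite n u i ltac:(lia)). split; auto.
      eapply bsign_transfer; eauto.
Qed.

Lemma witness_cases i b : witness n u i b = left_nz u i \/ witness n u i b = right_nz n u i.
Proof. unfold witness. destruct Rlt_dec; auto. destruct Nat.leb; auto. Qed.

(** The only delicate case is when the witness of [i] is [right_nz i] lying
    beyond [i'] while that of [i'] is [left_nz i'] ([= left_nz i], as all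
    entries in between vanish): then [u (left_nz i)] would have both signs. *)
Lemma witness_mono i i' b : (i < i')%nat -> (i' < n)%nat -> 0 <= bsign b * v i ->
  0 <= bsign (negb b) * v i' ->
  (witness n u i b <= witness n u i' (negb b))%nat.
Proof.
  intros Hii' Hi' Hv Hv'.
  assert (G1 : (left_nz u i <= witness n u i' (negb b))%nat).
  { destruct (witness_cases i' (negb b)) as [E|E]; rewrite E.
    apply left_nz_mono; lia. pose proof (left_nz_le u i). pose proof (right_nz_ge n u i'). lia. }
  unfold witness at 1. destruct (Rlt_dec 0 (bsign b * u (left_nz u i))).
  destruct (Nat.leb (dist_left n u i) (dist_right n u i)); auto. 2: auto.
  all: unfold witness; destruct (Rlt_dec 0 (bsign (negb b) * u (left_nz u i'))) as [C|C].
  all: try (apply right_nz_mono; lia).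
  all: destruct (Nat.leb_spec (dist_left n u i') (dist_right n u i')) as [C2|C2];
       try (apply right_nz_mono; lia).
  all: destruct (le_lt_dec (right_nz n u i) i') as [h|h];
   [ apply left_nz_ge; auto; apply right_nz_nonzero; lia | ].
  all: assert (Z : forall j, (i <= j <= i')%nat -> u j = 0) by
         (intros j Hj; apply (right_nz_zeros n u i j); lia).
  all: assert (EL : left_nz u i' = left_nz u i)
         by (apply left_nz_over_zeros; [lia| intros; apply Z; lia]).
  all: assert (ER : right_nz n u i = right_nz n u i')
         by (apply right_nz_over_zeros; [lia| intros; apply Z; lia]).
  all: rewrite EL in C; rewrite bsign_negb in C.
  all: assert (HL : u (left_nz u i) <> 0) by (intro E; rewrite E in C; lra).
  all: assert (DLi : dist_left n u i = (i - left_nz u i)%nat)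
         by (unfold dist_left, has_left_nz; destruct Req_EM_T; auto; contradiction).
  all: assert (DLi' : dist_left n u i' = (i' - left_nz u i)%nat)
         by (unfold dist_left, has_left_nz; rewrite EL; destruct Req_EM_T; auto; contradiction).
  all: assert (DRr : (dist_right n u i' <= dist_right n u i)%nat) by
         (unfold dist_right; rewrite ER; destruct (Nat.ltb_spec (right_nz n u i') n); lia).
  all: pose proof (left_nz_le u i).
  all: assert (Hlt : (dist_left n u i < dist_right n u i)%nat) by lia.
  all: destruct (HF i ltac:(lia)) as [F1 _]; specialize (F1 Hlt).
  all: pose proof (bsign_transfer _ _ _ Hv F1); lra.
Qed.

Fixpoint weak_chain (i : nat) (b : bool) (k : nat) : Prop :=
  match k with
  | O => True
  | S k' => exists j, (i < j < n)%nat /\ 0 <= bsign (negb b) * v j /\ weak_chain j (negb b) k'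
  end.

Fixpoint strict_chain (i : nat) (k : nat) : Prop :=
  match k with
  | O => True
  | S k' => exists j, (i < j < n)%nat /\ u i * u j < 0 /\ strict_chain j k'
  end.

Lemma strict_chain_of_weak_chain k : forall i b, (i < n)%nat -> 0 <= bsign b * v i ->
  weak_chain i b k -> strict_chain (witness n u i b) k.
Proof.
  induction k; intros i b Hi Hv W; simpl; auto.
  destruct W as [j [Hj [Hvj W]]].
  exists (witness n u j (negb b)).
  destruct (witness_sign i b Hi Hv) as [A1 A2].
  destruct (witness_sign j (negb b) ltac:(lia) Hvj) as [B1 B2].
  pose proof (witness_mono i j b ltac:(lia) ltac:(lia) Hv Hvj).
  rewrite bsign_negb in B2.
  assert (Hneg : u (witness n u i b) * u (witness n u j (negb b)) < 0).
  { destruct (bsign_cases b) as [S|S]; rewrite S in *; nra. }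
  split; [|split; [auto| apply IHk; auto; lia]].
  split; auto. destruct (Nat.eq_dec (witness n u i b) (witness n u j (negb b))) as [E|E]; [|lia].
  rewrite E in Hneg. nra.
Qed.
End NearestSign.

Lemma weak_chain_shift n v i i' b k : (i <= i')%nat -> weak_chain n v i' b k ->
  weak_chain n v i b k.
Proof. destruct k; simpl; auto. intros H [j [Hj R]]. exists j; split; auto; lia. Qed.

Lemma weak_chain_of_changes n c v : compatible n c v -> forall k i k', (i + k <= n - 1)%nat ->
  (k' <= changes_from c i k)%nat -> weak_chain n v i (c i) k'.
Proof.
  intros Hc. induction k; intros i k' Hk Hk'; simpl in Hk'.
  - replace k' with 0%nat by lia; simpl; auto.
  - destruct (Bool.eqb (c i) (c (S i))) eqn:E.
    + apply Bool.eqb_prop in E. apply weak_chain_shift with (S i). lia.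
      rewrite E. apply IHk; lia.
    + destruct k' as [|k']. simpl; auto.
      simpl. exists (S i). assert (E' : c (S i) = negb (c i)).
      { destruct (c i), (c (S i)); simpl in *; auto; discriminate. }
      split. lia. split. rewrite <- E'. apply Hc. lia.
      rewrite <- E'. apply IHk; lia.
Qed.

Lemma changes_from_pos c i a : c i <> c (i + a)%nat -> (1 <= changes_from c i a)%nat.
Proof.
  revert i; induction a; intros i H. rewrite Nat.add_0_r in H; contradiction.
  simpl. destruct (Bool.eqb (c i) (c (S i))) eqn:E. 2: lia.
  apply Bool.eqb_prop in E. rewrite E in H. replace (i + S a)%nat with (S i + a)%nat in H by lia.
  specialize (IHa (S i) H). lia.
Qed.

Lemma changes_of_strict_chain n u c : compatible n c u -> forall k i f, strict_chain n u i k ->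
  (i + f = n - 1)%nat ->
  (k <= changes_from c i f)%nat.
Proof.
  intros Hc. induction k; intros i f S Hf. lia.
  destruct S as [j [Hj [Hn S]]].
  replace f with ((j - i) + (n - 1 - j))%nat by lia. rewrite changes_from_split.
  replace (i + (j - i))%nat with j by lia.
  specialize (IHk j (n - 1 - j)%nat S ltac:(lia)).
  assert (c i <> c (i + (j - i))%nat).
  { replace (i + (j - i))%nat with j by lia. intro E.
    pose proof (Hc i ltac:(lia)). pose proof (Hc j ltac:(lia)). rewrite E in *.
    destruct (bsign_cases (c j)) as [S'|S']; rewrite S' in *; nra. }
  pose proof (changes_from_pos c i (j - i) H). lia.
Qed.

Lemma Smin_ge_of_nearest_sign n u v k : (exists j, (j < n)%nat /\ u j <> 0) -> nearest_sign n u v ->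
  Smax_ge n v k -> Smin_ge n u k.
Proof.
  intros Hu HF [c [Hc Hk]] c' Hc'.
  assert (Hn : (1 <= n)%nat) by (destruct Hu as [j [Hj _]]; lia).
  pose proof (weak_chain_of_changes n c v Hc (n - 1) 0 k ltac:(lia) Hk) as W.
  pose proof (strict_chain_of_weak_chain n u v Hu HF k 0 (c 0%nat) ltac:(lia) (Hc 0%nat
      ltac:(lia)) W) as S.
  destruct (witness_sign n u v Hu HF 0 (c 0%nat) ltac:(lia) (Hc 0%nat ltac:(lia))) as [Hp _].
  set (p := witness n u 0 (c 0%nat)) in *.
  pose proof (changes_of_strict_chain n u c' Hc' k p (n - 1 - p) S ltac:(lia)).
  unfold changes. replace (n - 1)%nat with (p + (n - 1 - p))%nat by lia.
  rewrite changes_from_split. simpl. lia.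
Qed.

Lemma Rdiv_le_0_compat a b : 0 <= a -> 0 < b -> 0 <= a / b.
Proof. intros. unfold Rdiv. apply Rmult_le_pos; auto. left; apply Rinv_0_lt_compat; auto. Qed.

Lemma nondecreasing_of_deriv g g' a b : a <= b ->
  (forall c, a <= c <= b -> derivable_pt_lim g c (g' c)) ->
  (forall c, a <= c <= b -> 0 <= g' c) -> g a <= g b.
Proof.
  intros Hab Hd Hp. destruct (Rle_lt_or_eq_dec a b Hab) as [H|H]; [|subst; lra].
  destruct (MVT_cor2 g g' a b H Hd) as [c [E Hc]].
  assert (0 <= g' c * (b - a)) by (apply Rmult_le_pos; [apply Hp; lra| lra]). lra.
Qed.

Lemma derive_pow_shift t0 k s :
  derivable_pt_lim (fun y => (y - t0) ^ k) s (INR k * (s - t0) ^ Nat.pred k).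
Proof.
  assert (H := derivable_pt_lim_comp (fun y => y - t0) (fun y => y ^ k) s 1
    (INR k * (s - t0) ^ Nat.pred k)).
  replace (INR k * (s - t0) ^ Nat.pred k) with (INR k * (s - t0) ^ Nat.pred k * 1) by ring.
  apply H.
  - replace 1 with (1 - 0) by ring. apply derivable_pt_lim_minus.
    apply derivable_pt_lim_id. apply derivable_pt_lim_const.
  - apply derivable_pt_lim_pow.
Qed.

Lemma integrate_lower_bound g g' t0 h q m : 0 <= h ->
  (forall s, t0 <= s <= t0 + h -> derivable_pt_lim g s (g' s)) -> g t0 = 0 ->
  (forall s, t0 <= s <= t0 + h -> q * (s - t0) ^ m <= g' s) ->
  forall s, t0 <= s <= t0 + h -> q / INR (S m) * (s - t0) ^ (S m) <= g s.
Proof.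
  intros Hh Hd H0 Hq s Hs.
  set (phi := fun y => g y - q / INR (S m) * (y - t0) ^ (S m)).
  assert (phi t0 <= phi s).
  { apply (nondecreasing_of_deriv phi (fun y => g' y - q / INR (S m) * (INR (S m) * (y - t0) ^ m))).
    lra.
    - intros c Hc. apply derivable_pt_lim_minus. apply Hd; lra.
      apply derivable_pt_lim_scal. apply (derive_pow_shift t0 (S m) c).
    - intros c Hc. assert (INR (S m) <> 0) by (apply not_0_INR; lia).
      replace (q / INR (S m) * (INR (S m) * (c - t0) ^ m)) with (q * (c - t0) ^ m) by (field; auto).
      specialize (Hq c ltac:(lra)). lra. }
  unfold phi in H. rewrite H0 in H. replace (t0 - t0) with 0 in H by ring.
  rewrite pow_i in H by lia. lra.
Qed.

Lemma finite_common_delta n (P : nat -> R -> Prop) :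
  (forall i d d', 0 < d' <= d -> P i d -> P i d') ->
  (forall i, (i < n)%nat -> exists d, 0 < d /\ P i d) ->
  exists d, 0 < d /\ forall i, (i < n)%nat -> P i d.
Proof.
  intros Hm. induction n; intro H.
  - exists 1; split; [lra| intros; lia].
  - destruct IHn as [d1 [Hd1 P1]]. intros i Hi; apply H; lia.
    destruct (H n ltac:(lia)) as [d2 [Hd2 P2]].
    exists (Rmin d1 d2). split. apply Rmin_glb_lt; auto.
    intros i Hi. destruct (Nat.eq_dec i n). subst. apply Hm with d2; auto.
    split. apply Rmin_glb_lt; auto. apply Rmin_r.
    apply Hm with d1; auto. split. apply Rmin_glb_lt; auto. apply Rmin_l. apply P1; lia.
Qed.

Lemma finite_common_rank n (P : nat -> nat -> Prop) :
  (forall i N N', (N <= N')%nat -> P i N -> P i N') ->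
  (forall i, (i < n)%nat -> exists N, P i N) ->
  exists N, forall i, (i < n)%nat -> P i N.
Proof.
  intros Hm. induction n; intro H.
  - exists 0%nat; intros; lia.
  - destruct IHn as [N1 P1]. intros i Hi; apply H; lia.
    destruct (H n ltac:(lia)) as [N2 P2].
    exists (Nat.max N1 N2). intros i Hi. destruct (Nat.eq_dec i n). subst.
    apply Hm with N2; auto; lia. apply Hm with N1. lia. apply P1; lia.
Qed.

(** The sign of a real number, as [+1] or [-1] (with [rsign 0 = 1]). *)
Definition rsign (r : R) : R := bsign (nonneg_bit r).
Lemma rsign_cases r : rsign r = 1 \/ rsign r = -1.
Proof. apply bsign_cases. Qed.
Lemma rsign_pos r : r <> 0 -> 0 < rsign r * r.
Proof. intro H. unfold rsign, nonneg_bit, bsign. destruct (Rle_dec 0 r); lra. Qed.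
Lemma rsign_same r r' : 0 < r * r' -> rsign r = rsign r'.
Proof. intro H. unfold rsign, nonneg_bit, bsign.
  destruct (Rle_dec 0 r) as [a|a], (Rle_dec 0 r') as [b|b]; auto.
  apply Rnot_le_lt in b; nra. apply Rnot_le_lt in a; nra.
Qed.
Lemma rsign_prod r w : r <> 0 -> 0 < rsign r * w -> 0 < r * w.
Proof.
  intros H1 H2. pose proof (rsign_pos r H1). destruct (rsign_cases r) as [S|S]; rewrite S in *; nra.
Qed.

Lemma sumR_ext k f g : (forall j, (j < k)%nat -> f j = g j) -> sumR k f = sumR k g.
Proof. induction k; intro H; simpl; auto. rewrite IHk, H; auto; intros; apply H; lia. Qed.
Lemma sumR_plus k f g : sumR k (fun j => f j + g j) = sumR k f + sumR k g.
Proof. induction k; simpl; [ring| rewrite IHk; ring]. Qed.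
Lemma sumR_scal k c f : sumR k (fun j => c * f j) = c * sumR k f.
Proof. induction k; simpl; [ring| rewrite IHk; ring]. Qed.
Lemma sumR_le k f g : (forall j, (j < k)%nat -> f j <= g j) -> sumR k f <= sumR k g.
Proof. induction k; intro H; simpl. lra. apply Rplus_le_compat. apply IHk; intros; apply H; lia.
  apply H; lia.
Qed.
Lemma sumR_abs k f : Rabs (sumR k f) <= sumR k (fun j => Rabs (f j)).
Proof. induction k; simpl. rewrite Rabs_R0; lra. eapply Rle_trans. apply Rabs_triang. lra. Qed.
Lemma sumR_const k c : sumR k (fun _ => c) = INR k * c.
Proof. induction k; simpl sumR. simpl; ring. rewrite IHk, S_INR; ring. Qed.
Lemma sumR_nonneg k f : (forall j, (j < k)%nat -> 0 <= f j) -> 0 <= sumR k f.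
Proof. intro H. replace 0 with (sumR k (fun _ => 0)). apply sumR_le; auto. rewrite sumR_const;
  ring.
Qed.

Definition tri_row n (M : nat -> nat -> R) (v : nat -> R) (i : nat) : R :=
  (if (0 <? i)%nat then M i (i - 1)%nat * v (i - 1)%nat else 0) + M i i * v i +
  (if (i + 1 <? n)%nat then M i (i + 1)%nat * v (i + 1)%nat else 0).

Lemma matvec_tridiagonal n M v i : (i < n)%nat ->
  (forall j, (j < n)%nat -> (i + 1 < j \/ j + 1 < i)%nat -> M i j = 0) ->
  matvec n M v i = tri_row n M v i.
Proof.
  intros Hi HM. unfold matvec, tri_row.
  assert (G : forall k, (k <= n)%nat -> sumR k (fun j => M i j * v j) =
    (if (0 <? i)%nat && (i - 1 <? k)%nat then M i (i - 1)%nat * v (i - 1)%nat else 0) +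
    (if (i <? k)%nat then M i i * v i else 0) +
    (if (i + 1 <? k)%nat then M i (i + 1)%nat * v (i + 1)%nat else 0)).
  { induction k; intro Hk; simpl.
    - destruct ((0 <? i)%nat); simpl; ring.
    - rewrite IHk by lia.
      destruct (Nat.ltb_spec 0 i); destruct (Nat.ltb_spec (i-1) k);
      destruct (Nat.ltb_spec (i-1) (S k));
      destruct (Nat.ltb_spec i k); destruct (Nat.ltb_spec i (S k));
      destruct (Nat.ltb_spec (i+1) k); destruct (Nat.ltb_spec (i+1) (S k)); simpl;
      try (exfalso; lia);
      try (replace k with (i - 1)%nat by lia; ring);
      try (replace k with i by lia; ring);
      try (replace k with (i + 1)%nat by lia; ring);
      try (rewrite (HM k) by lia; ring). }
  rewrite G by lia.
  destruct (Nat.ltb_spec 0 i); destruct (Nat.ltb_spec (i-1) n); destruct (Nat.ltb_spec i n);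
  simpl; try lia; ring.
Qed.

Definition tridiagonal n (M : R -> nat -> nat -> R) : Prop :=
  forall t i j, (i < n)%nat -> (j < n)%nat -> (i + 1 < j \/ j + 1 < i)%nat -> M t i j = 0.

Lemma derive_tridiagonal n M z t i : tridiagonal n M -> is_solution n M z -> (i < n)%nat ->
  derivable_pt_lim (fun s => z s i) t (tri_row n (M t) (z t) i).
Proof. intros Ht Hs Hi. rewrite <- matvec_tridiagonal; auto. Qed.

Definition sqnorm n (a : nat -> R) : R := sumR n (fun i => a i * a i).

Lemma sqnorm_nonneg n a : 0 <= sqnorm n a.
Proof. apply sumR_nonneg. intros; nra. Qed.
Lemma sqnorm_ge n a i : (i < n)%nat -> a i * a i <= sqnorm n a.
Proof.
  unfold sqnorm. induction n; intro H. lia. simpl. destruct (Nat.eq_dec i n).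
  subst. pose proof (sumR_nonneg n (fun i => a i * a i) ltac:(intros; nra)). lra.
  assert (a i * a i <= sumR n (fun i => a i * a i)) by (apply IHn; lia). nra.
Qed.
Lemma abs_le_sqnorm n a i : (i < n)%nat -> Rabs (a i) <= 1 + sqnorm n a.
Proof.
  intro H. pose proof (sqnorm_ge n a i H). unfold Rabs; destruct Rcase_abs; nra.
Qed.

Lemma derive_sumR k (f : nat -> R -> R) f' t :
  (forall i, (i < k)%nat -> derivable_pt_lim (f i) t (f' i)) ->
  derivable_pt_lim (fun s => sumR k (fun i => f i s)) t (sumR k f').
Proof.
  induction k; intro H; simpl.
  - apply derivable_pt_lim_const.
  - apply (derivable_pt_lim_plus (fun s => sumR k (fun i => f i s)) (f k)).
    apply IHk; intros; apply H; lia. apply H; lia.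
Qed.

Lemma bilinear_bound n (E : nat -> nat -> R) e a b : 0 <= e ->
  (forall i j, (i < n)%nat -> (j < n)%nat -> Rabs (E i j) <= e) ->
  Rabs (sumR n (fun i => a i * sumR n (fun j => E i j * b j))) <=
    e * INR n * (sqnorm n a + sqnorm n b) / 2.
Proof.
  intros He HE. eapply Rle_trans. apply sumR_abs.
  eapply Rle_trans with (sumR n (fun i => sumR n (fun j => e * ((a i * a i + b j * b j) / 2)))).
  - apply sumR_le. intros i Hi. rewrite Rabs_mult.
    eapply Rle_trans. apply Rmult_le_compat_l. apply Rabs_pos. apply sumR_abs.
    rewrite <- sumR_scal. apply sumR_le. intros j Hj. rewrite Rabs_mult.
    specialize (HE i j Hi Hj).
    assert (Rabs (a i) * Rabs (b j) <= (a i * a i + b j * b j) / 2).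
    { pose proof (Rabs_pos (a i)); pose proof (Rabs_pos (b j)).
      assert (Rabs (a i) * Rabs (a i) = a i * a i) by (rewrite <- Rabs_mult; apply Rabs_pos_eq;
      nra).
      assert (Rabs (b j) * Rabs (b j) = b j * b j) by (rewrite <- Rabs_mult; apply Rabs_pos_eq;
      nra).
      assert (0 <= (Rabs (a i) - Rabs (b j)) * (Rabs (a i) - Rabs (b j))) by apply Rle_0_sqr.
      nra. }
    pose proof (Rabs_pos (a i)); pose proof (Rabs_pos (b j)); pose proof (Rabs_pos (E i j)).
    assert (Rabs (a i) * (Rabs (E i j) * Rabs (b j)) <= Rabs (a i) * (e * Rabs (b j))).
    { apply Rmult_le_compat_l; auto. apply Rmult_le_compat_r; auto. }
    nra.
  - unfold sqnorm. right.
    transitivity (sumR n (fun i =>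
        e / 2 * (INR n * (a i * a i)) + e / 2 * sumR n (fun j => b j * b j))).
    + apply sumR_ext. intros i Hi.
      rewrite (sumR_ext n (fun j => e * ((a i * a i + b j * b j) / 2))
        (fun j => e / 2 * (a i * a i) + e / 2 * (b j * b j))) by (intros; field).
      rewrite sumR_plus, sumR_const, sumR_scal. ring.
    + rewrite sumR_plus, sumR_const, sumR_scal, sumR_scal. field.
Qed.

Lemma gronwall_forward f f' c eta a b : a <= b -> 0 < c ->
  (forall s, a <= s <= b -> derivable_pt_lim f s (f' s)) ->
  (forall s, a <= s <= b -> f' s <= c * f s + eta) ->
  f b + eta / c <= (f a + eta / c) * exp (c * (b - a)).
Proof.
  intros Hab Hc Hd Hb.
  set (phi := fun s => - ((f s + eta / c) * exp (- (c * (s - a))))).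
  assert (phi a <= phi b).
  { apply (nondecreasing_of_deriv phi (fun s => - (f' s * exp (- (c * (s - a))) +
        (f s + eta / c) * (exp (- (c * (s - a))) * (- (c * (1 - 0))))))); auto.
    - intros s Hs. apply derivable_pt_lim_opp.
      apply (derivable_pt_lim_mult (fun s => f s + eta / c) (fun s => exp (- (c * (s - a))))).
      + replace (f' s) with (f' s + 0) by ring. apply derivable_pt_lim_plus. apply Hd; auto.
        apply derivable_pt_lim_const.
      + apply (derivable_pt_lim_comp (fun s => - (c * (s - a))) exp).
        apply derivable_pt_lim_opp. apply derivable_pt_lim_scal.
        apply derivable_pt_lim_minus. apply derivable_pt_lim_id. apply derivable_pt_lim_const.
        apply derivable_pt_lim_exp.
    - intros s Hs. specialize (Hb s Hs). pose proof (exp_pos (- (c * (s - a)))).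
      assert ((f' s - c * f s - eta) * exp (- (c * (s - a))) <= 0).
      { assert (0 <= (eta + c * f s - f' s) * exp (- (c * (s - a)))) by (apply Rmult_le_pos; lra).
        lra. }
      replace (- (f' s * exp (- (c * (s - a))) +
                  (f s + eta / c) * (exp (- (c * (s - a))) * - (c * (1 - 0)))))
        with (- ((f' s - c * f s - eta) * exp (- (c * (s - a))))) by (field; lra).
      lra. }
  unfold phi in H. replace (- (c * (a - a))) with 0 in H by ring. rewrite exp_0 in H.
  assert (E : exp (c * (b - a)) * exp (- (c * (b - a))) = 1).
  { rewrite <- exp_plus. replace (c * (b - a) + - (c * (b - a))) with 0 by ring. apply exp_0. }
  pose proof (exp_pos (c * (b - a))).
  assert ((f b + eta / c) * exp (- (c * (b - a))) <= f a + eta / c) by lra.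
  apply Rmult_le_compat_r with (r := exp (c * (b - a))) in H1; [|lra].
  replace ((f b + eta / c) * exp (- (c * (b - a))) * exp (c * (b - a))) with (f b + eta / c) in H1.
  lra. rewrite Rmult_assoc, (Rmult_comm (exp _)), E. ring.
Qed.

Lemma derive_opp_arg f f' s : derivable_pt_lim f (- s) (f' (- s)) ->
  derivable_pt_lim (fun y => f (- y)) s (- f' (- s)).
Proof.
  intro H. replace (- f' (- s)) with (f' (- s) * (- 1)) by ring.
  apply (derivable_pt_lim_comp (fun y => - y) f). replace (-1) with (- (1)) by ring.
  apply derivable_pt_lim_opp. apply derivable_pt_lim_id. exact H.
Qed.

Lemma gronwall_backward f f' c eta a b : a <= b -> 0 < c ->
  (forall s, a <= s <= b -> derivable_pt_lim f s (f' s)) ->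
  (forall s, a <= s <= b -> - f' s <= c * f s + eta) ->
  f a + eta / c <= (f b + eta / c) * exp (c * (b - a)).
Proof.
  intros Hab Hc Hd Hb.
  pose proof (gronwall_forward (fun y => f (- y)) (fun y => - f' (- y)) c eta (- b) (- a)
    ltac:(lra) Hc) as G.
  replace (- a - - b) with (b - a) in G by ring. rewrite !Ropp_involutive in G. apply G.
  - intros s Hs. apply derive_opp_arg. apply Hd; lra.
  - intros s Hs. apply Hb; lra.
Qed.

Lemma gronwall_two_sided f f' c eta t : 0 < c ->
  (forall s, Rabs s <= Rabs t -> derivable_pt_lim f s (f' s)) ->
  (forall s, Rabs s <= Rabs t -> Rabs (f' s) <= c * f s + eta) ->
  f t + eta / c <= (f 0 + eta / c) * exp (c * Rabs t).
Proof.
  intros Hc Hd Hb. destruct (Rle_dec 0 t).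
  - rewrite (Rabs_pos_eq t) in * by auto.
    pose proof (gronwall_forward f f' c eta 0 t r Hc) as Gr. rewrite Rminus_0_r in Gr.
    apply Gr.
    + intros s Hs. apply Hd. rewrite Rabs_pos_eq; lra.
    + intros s Hs. assert (Hs' : Rabs s <= t) by (rewrite Rabs_pos_eq; lra).
      pose proof (Hb s Hs'). revert H; unfold Rabs; destruct Rcase_abs; intros; lra.
  - rewrite (Rabs_left t) in * by lra.
    pose proof (gronwall_backward f f' c eta t 0 ltac:(lra) Hc) as Gr.
    replace (0 - t) with (- t) in Gr by ring. apply Gr.
    + intros s Hs. apply Hd. rewrite Rabs_left1; lra.
    + intros s Hs. assert (Hs' : Rabs s <= - t) by (rewrite Rabs_left1; lra).
      pose proof (Hb s Hs'). revert H; unfold Rabs; destruct Rcase_abs; intros; lra.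
Qed.

Section Energy.
Variables (n : nat) (M : R -> nat -> nat -> R) (z : R -> nat -> R) (K : R).
Hypothesis HK : 0 <= K.
Hypothesis Hb : forall t i j, (i < n)%nat -> (j < n)%nat -> Rabs (M t i j) <= K.
Hypothesis Hs : is_solution n M z.

Definition energy_rate := 2 * K * INR n + 1.
Lemma energy_rate_pos : 0 < energy_rate.
Proof. unfold energy_rate. pose proof (pos_INR n). nra. Qed.

Lemma energy_deriv t : derivable_pt_lim (fun s => sqnorm n (z s)) t
  (sumR n (fun i => 2 * (z t i * matvec n (M t) (z t) i))).
Proof.
  unfold sqnorm. apply (derive_sumR n (fun i s => z s i * z s i)).
  intros i Hi. replace (2 * (z t i * matvec n (M t) (z t) i)) with
    (matvec n (M t) (z t) i * z t i + z t i * matvec n (M t) (z t) i) by ring.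
  apply (derivable_pt_lim_mult (fun s => z s i) (fun s => z s i)); apply Hs; auto.
Qed.

Lemma energy_deriv_bound t : Rabs (sumR n (fun i => 2 * (z t i * matvec n (M t) (z t) i))) <=
    energy_rate * sqnorm n (z t).
Proof.
  rewrite sumR_scal, Rabs_mult, Rabs_pos_eq by lra.
  pose proof (bilinear_bound n (M t) K (z t) (z t) HK (Hb t)). unfold matvec in *.
  pose proof (sqnorm_nonneg n (z t)). unfold energy_rate. nra.
Qed.

Lemma energy_forward a b : a <= b -> sqnorm n (z b) <= sqnorm n (z a) * exp (energy_rate * (b - a)).
Proof.
  intro H. pose proof (gronwall_forward (fun s => sqnorm n (z s)) _ energy_rate 0 a b H
      energy_rate_pos
    (fun s _ => energy_deriv s)) as G.
  replace (0 / energy_rate) with 0 in G by (field; pose proof energy_rate_pos; lra).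
  rewrite !Rplus_0_r in G. apply G. intros s _. pose proof (energy_deriv_bound s).
  revert H0; unfold Rabs; destruct Rcase_abs; intros; lra.
Qed.

Lemma energy_backward a b : a <= b ->
  sqnorm n (z a) <= sqnorm n (z b) * exp (energy_rate * (b - a)).
Proof.
  intro H. pose proof (gronwall_backward (fun s => sqnorm n (z s)) _ energy_rate 0 a b H
      energy_rate_pos
    (fun s _ => energy_deriv s)) as G.
  replace (0 / energy_rate) with 0 in G by (field; pose proof energy_rate_pos; lra).
  rewrite !Rplus_0_r in G. apply G. intros s _. pose proof (energy_deriv_bound s).
  revert H0; unfold Rabs; destruct Rcase_abs; intros; lra.
Qed.

Lemma energy_abs a s : sqnorm n (z s) <= sqnorm n (z a) * exp (energy_rate * Rabs (s - a)).
Proof.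
  destruct (Rle_dec a s).
  - rewrite Rabs_pos_eq by lra. apply energy_forward; auto.
  - rewrite Rabs_left by lra. replace (- (s - a)) with (a - s) by ring.
    apply energy_backward; lra.
Qed.

Lemma energy_never_vanishes t0 : 0 < sqnorm n (z t0) -> forall t, 0 < sqnorm n (z t).
Proof.
  intros H t. pose proof (energy_abs t t0) as E. pose proof (exp_pos (energy_rate * Rabs (t0 - t))).
  destruct (Rle_lt_or_eq_dec 0 _ (sqnorm_nonneg n (z t))) as [P|Z]; auto.
  rewrite <- Z in E. lra.
Qed.
End Energy.

Lemma sqnorm_pos n a : (exists i, (i < n)%nat /\ a i <> 0) -> 0 < sqnorm n a.
Proof.
  intros [i [Hi Ha]]. pose proof (sqnorm_ge n a i Hi).
  assert (0 < a i * a i) by (apply Rsqr_pos_lt in Ha; exact Ha). lra.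
Qed.

Lemma nonzero_of_sqnorm_pos n a : 0 < sqnorm n a -> exists i, (i < n)%nat /\ a i <> 0.
Proof.
  intro H. apply NNPP; intro H'.
  assert (sqnorm n a = 0).
  { unfold sqnorm. transitivity (sumR n (fun _ => 0)). apply sumR_ext.
    intros j Hj. destruct (Req_EM_T (a j) 0) as [E|E]. rewrite E; ring. exfalso; apply H'; eauto.
    rewrite sumR_const; ring. }
  lra.
Qed.

Lemma exp_monotone a b : a <= b -> exp a <= exp b.
Proof. intro H. destruct (Rle_lt_or_eq_dec a b H). left; apply exp_increasing; auto. subst; lra.
  Qed.

Lemma continuous_of_deriv f l x : derivable_pt_lim f x l ->
  forall e, 0 < e -> exists d, 0 < d /\ forall y, Rabs (y - x) < d -> Rabs (f y - f x) < e.
Proof.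
  intros H e He. pose proof (derivable_continuous_pt f x (exist _ l H)) as C.
  destruct (C e He) as [d [Hd Hy]]. exists d. split; auto. intros y Hyd.
  destruct (Req_dec y x). subst. rewrite Rminus_diag, Rabs_R0; auto.
  apply (Hy y). split. split. constructor. auto. exact Hyd.
Qed.

Lemma rsign_abs r : rsign r * r = Rabs r.
Proof. unfold rsign, nonneg_bit, bsign, Rabs. destruct (Rle_dec 0 r), (Rcase_abs r); lra. Qed.

Section Distances.
Variable n : nat.
Variable u : nat -> R.
Hypothesis Hu : exists j, (j < n)%nat /\ u j <> 0.
Notation dist_left := (dist_left n u).
Notation dist_right := (dist_right n u).
Notation right_nz := (right_nz n u).

Lemma dist_left_nonzero i : u i <> 0 -> dist_left i = 0%nat.
Proof. intro H. unfold dist_left, has_left_nz. rewrite left_nz_self by auto. destruct Req_EM_T;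
  [contradiction|lia].
Qed.
Lemma dist_right_nonzero i : (i < n)%nat -> u i <> 0 -> dist_right i = 0%nat.
Proof. intros Hi H. unfold dist_right. rewrite right_nz_self by auto. destruct (Nat.ltb_spec i n);
  lia.
Qed.
Lemma dist_left_0 i : (i < n)%nat -> dist_left i = 0%nat -> u i <> 0 /\ left_nz u i = i.
Proof.
  intros Hi H. unfold dist_left, has_left_nz in H. destruct Req_EM_T in H. lia.
  pose proof (left_nz_le u i). assert (left_nz u i = i) by lia. rewrite H1 in n0. auto.
Qed.
Lemma dist_right_0 i : (i < n)%nat -> dist_right i = 0%nat -> u i <> 0 /\ right_nz i = i.
Proof.
  intros Hi H. unfold dist_right in H. destruct (Nat.ltb_spec (right_nz i) n). 2: lia.
  pose proof (right_nz_ge n u i). assert (right_nz i = i) by lia. split; auto.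
  rewrite <- H2 at 1. apply right_nz_nonzero; auto.
Qed.

Lemma dist_left_zero_step i : (1 <= i)%nat -> (i < n)%nat -> u i = 0 ->
  left_nz u i = left_nz u (i - 1)%nat /\
  ((dist_left i = S (dist_left (i - 1)) /\ (dist_left (i-1) < n)%nat) \/ (dist_left i = n /\
  dist_left (i - 1) = n)).
Proof.
  intros H1 H2 H3. assert (E : left_nz u i = left_nz u (i - 1)).
  { replace i with (S (i - 1)) at 1 by lia. apply left_nz_zero_step.
    replace (S (i-1)) with i by lia; auto. }
  split; auto. unfold dist_left, has_left_nz. rewrite E.
  destruct Req_EM_T; [right; auto|left]. pose proof (left_nz_le u (i-1)). lia.
Qed.
Lemma dist_right_zero_step i : (i + 1 < n)%nat -> u i = 0 -> right_nz (i + 1)%nat = right_nz i /\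
  ((dist_right i = S (dist_right (i + 1)) /\ (dist_right (i + 1) < n)%nat) \/ (dist_right i = n /\
  dist_right (i + 1) = n)).
Proof.
  intros H1 H2. assert (E : right_nz (i+1) = right_nz i).
  { symmetry. replace (i+1)%nat with (S i) by lia. apply right_nz_zero_step; auto; lia. }
  split; auto. unfold dist_right. rewrite E. pose proof (right_nz_ge n u (i+1)). rewrite E in H.
  destruct (Nat.ltb_spec (right_nz i) n); [left|right]; lia.
Qed.
Lemma dist_left_finite_le i : (i < n)%nat -> (dist_left i < n)%nat -> (dist_left i <= i)%nat /\
  u (left_nz u i) <> 0 /\ dist_left i = (i - left_nz u i)%nat.
Proof. intros. destruct (dist_left_finite n u i H H0). split; auto. pose proof (left_nz_le u i);
  lia.
Qed.

Lemma dist_left_pred i m : (i < n)%nat -> dist_left i = S m -> (S m <= dist_right i)%nat ->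
  (1 <= i)%nat /\ u i = 0 /\ left_nz u (i - 1)%nat = left_nz u i /\
  ((u (i - 1)%nat <> 0 /\ m = 0%nat /\ left_nz u i = (i - 1)%nat) \/
   (u (i - 1)%nat = 0 /\ dist_left (i - 1)%nat = m /\ (m < dist_right (i - 1)%nat)%nat)).
Proof.
  intros Hi HL HR. pose proof (dist_left_le n u i Hi). pose proof (dist_right_le n u i ltac:(lia)).
  assert (HLn : (dist_left i < n)%nat).
  { destruct (dist_not_both_infinite n u i Hu Hi); lia. }
  destruct (dist_left_finite_le i Hi HLn) as [h1 [h2 h3]].
  assert (Hui : u i = 0) by (destruct (Req_EM_T (u i) 0); auto; rewrite dist_left_nonzero in HL;
  [lia|auto]).
  assert (H1 : (1 <= i)%nat) by lia.
  destruct (dist_left_zero_step i H1 Hi Hui) as [E D]. split; auto. split; auto. split; auto.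
  destruct (Req_EM_T (u (i-1)%nat) 0) as [Z|Z].
  - right. split; auto. destruct D as [[D1 D2]|[D1 D2]]; [|lia].
    split. lia.
    destruct (dist_right_zero_step (i - 1) ltac:(lia) Z) as [E2 D'].
    replace (i - 1 + 1)%nat with i in * by lia.
    destruct D' as [[D3 D4]|[D3 D4]]; lia.
  - left. split; auto. rewrite E. rewrite left_nz_self by auto. split; auto.
    rewrite h3, E, left_nz_self in HL by auto. lia.
Qed.

Lemma dist_right_succ i m : (i < n)%nat -> dist_right i = S m -> (S m <= dist_left i)%nat ->
  (i + 1 < n)%nat /\ u i = 0 /\ right_nz (i + 1)%nat = right_nz i /\
  ((u (i + 1)%nat <> 0 /\ m = 0%nat /\ right_nz i = (i + 1)%nat) \/
   (u (i + 1)%nat = 0 /\ dist_right (i + 1)%nat = m /\ (m < dist_left (i + 1)%nat)%nat)).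
Proof.
  intros Hi HR HL. pose proof (dist_left_le n u i Hi). pose proof (dist_right_le n u i ltac:(lia)).
  assert (HRn : (dist_right i < n)%nat).
  { destruct (dist_not_both_infinite n u i Hu Hi); lia. }
  destruct (dist_right_finite n u i HRn) as [h1 h2].
  assert (Hui : u i = 0) by (destruct (Req_EM_T (u i) 0); auto; rewrite dist_right_nonzero in HR;
  [lia|auto|auto]).
  assert (H1 : (i + 1 < n)%nat) by lia.
  destruct (dist_right_zero_step i H1 Hui) as [E D]. split; auto. split; auto. split; auto.
  destruct (Req_EM_T (u (i+1)%nat) 0) as [Z|Z].
  - right. split; auto. destruct D as [[D1 D2]|[D1 D2]]; [|lia].
    split. lia.
    destruct (dist_left_zero_step (i + 1) ltac:(lia) ltac:(lia) Z) as [E2 D'].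
    replace (i + 1 - 1)%nat with i in * by lia.
    destruct D' as [[D3 D4]|[D3 D4]]; lia.
  - left. split; auto. rewrite <- E. rewrite right_nz_self by auto. split; auto.
    rewrite h2, <- E, right_nz_self in HR by auto. lia.
Qed.

Lemma dist_left_succ_ge i : (i + 1 < n)%nat -> (dist_left i < dist_right i)%nat ->
  (dist_left i <= dist_left (i + 1)%nat)%nat /\ (dist_left i <= dist_right (i + 1)%nat)%nat.
Proof.
  intros Hi H. destruct (Nat.eq_dec (dist_left i) 0) as [Z|Z]. lia.
  assert (Hui : u i = 0) by (destruct (Req_EM_T (u i) 0); auto; rewrite dist_left_nonzero in Z;
  [lia|auto]).
  destruct (dist_right_zero_step i Hi Hui) as [E D].
  destruct (Req_EM_T (u (i+1)%nat) 0) as [Z2|Z2].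
  - destruct (dist_left_zero_step (i+1) ltac:(lia) Hi Z2) as [E2 D2].
    replace (i+1-1)%nat with i in * by lia.
    pose proof (dist_right_le n u i ltac:(lia)). destruct D, D2; lia.
  - rewrite (dist_right_nonzero (i+1)) in D by auto. destruct D; lia.
Qed.

Lemma dist_right_pred_ge i : (1 <= i)%nat -> (i < n)%nat -> (dist_right i < dist_left i)%nat ->
  (dist_right i <= dist_left (i - 1)%nat)%nat /\ (dist_right i <= dist_right (i - 1)%nat)%nat.
Proof.
  intros H1 Hi H. destruct (Nat.eq_dec (dist_right i) 0) as [Z|Z]. lia.
  assert (Hui : u i = 0) by (destruct (Req_EM_T (u i) 0); auto; rewrite dist_right_nonzero in Z;
  [lia|auto|auto]).
  destruct (dist_left_zero_step i H1 Hi Hui) as [E D].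
  destruct (Req_EM_T (u (i-1)%nat) 0) as [Z2|Z2].
  - destruct (dist_right_zero_step (i-1) ltac:(lia) Z2) as [E2 D2].
    replace (i-1+1)%nat with i in * by lia.
    pose proof (dist_left_le n u i ltac:(lia)). destruct D, D2; lia.
  - rewrite (dist_left_nonzero (i-1)) in D by auto. destruct D; lia.
Qed.

Lemma dist_neighbours i m : (i < n)%nat -> (S m <= dist_left i)%nat -> (S m <= dist_right i)%nat ->
  u i = 0 /\ ((1 <= i)%nat -> (m <= dist_left (i - 1)%nat)%nat /\
  (m <= dist_right (i - 1)%nat)%nat) /\
  ((i + 1 < n)%nat -> (m <= dist_left (i + 1)%nat)%nat /\ (m <= dist_right (i + 1)%nat)%nat).
Proof.
  intros Hi HL HR.
  assert (Hui : u i = 0) by (destruct (Req_EM_T (u i) 0); auto; rewrite dist_left_nonzero in HL;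
  [lia|auto]).
  split; auto. split.
  - intro H1. destruct (dist_left_zero_step i H1 Hi Hui) as [E D].
    destruct (Req_EM_T (u (i-1)%nat) 0) as [Z2|Z2].
    + destruct (dist_right_zero_step (i-1) ltac:(lia) Z2) as [E2 D2].
      replace (i-1+1)%nat with i in * by lia.
      destruct D, D2; lia.
    + rewrite (dist_left_nonzero (i-1)) in D by auto. destruct D; lia.
  - intro H1. destruct (dist_right_zero_step i H1 Hui) as [E D].
    destruct (Req_EM_T (u (i+1)%nat) 0) as [Z2|Z2].
    + destruct (dist_left_zero_step (i+1) ltac:(lia) H1 Z2) as [E2 D2].
      replace (i+1-1)%nat with i in * by lia.
      destruct D, D2; lia.
    + rewrite (dist_right_nonzero (i+1)) in D by auto. destruct D; lia.
Qed.
End Distances.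

Lemma abs_unit_sign sig : (sig = 1 \/ sig = -1) -> Rabs sig = 1.
Proof. intros [H|H]; subst; unfold Rabs; destruct Rcase_abs; lra. Qed.

Lemma tri_row_bound n M v i K X : 0 <= K -> 0 <= X -> (forall j, (j < n)%nat ->
  Rabs (M i j) <= K) ->
  (i < n)%nat ->
  ((0 < i)%nat -> Rabs (v (i - 1)%nat) <= X) -> Rabs (v i) <= X ->
  ((i + 1 < n)%nat -> Rabs (v (i + 1)%nat) <= X) -> Rabs (tri_row n M v i) <= 3 * K * X.
Proof.
  intros HK HX HM Hi H1 H2 H3. unfold tri_row.
  assert (A2 : Rabs (M i i * v i) <= K * X) by (rewrite Rabs_mult; apply Rmult_le_compat;
  auto using Rabs_pos).
  assert (A1 : Rabs (if (0 <? i)%nat then M i (i - 1)%nat * v (i - 1)%nat else 0) <= K * X).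
  { destruct (Nat.ltb_spec 0 i). rewrite Rabs_mult; apply Rmult_le_compat; auto using Rabs_pos.
    apply HM; lia. rewrite Rabs_R0; nra. }
  assert (A3 : Rabs (if (i + 1 <? n)%nat then M i (i + 1)%nat * v (i + 1)%nat else 0) <= K * X).
  { destruct (Nat.ltb_spec (i+1) n). rewrite Rabs_mult; apply Rmult_le_compat; auto using Rabs_pos.
    rewrite Rabs_R0; nra. }
  eapply Rle_trans. apply Rabs_triang. eapply Rle_trans. apply Rplus_le_compat_r. apply Rabs_triang.
  lra.
Qed.

Lemma tri_row_lower_left n M v i K X eps Y sig : (0 < i)%nat -> (i < n)%nat -> 0 <= K -> 0 <= X ->
  eps <= M i (i - 1)%nat -> 0 <= eps -> 0 <= Y -> Y <= sig * v (i - 1)%nat ->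
  (forall j, (j < n)%nat -> Rabs (M i j) <= K) -> Rabs (v i) <= X ->
  ((i + 1 < n)%nat -> Rabs (v (i + 1)%nat) <= X) -> (sig = 1 \/ sig = -1) ->
  eps * Y - 2 * K * X <= sig * tri_row n M v i.
Proof.
  intros Hi Hn HK HX He He0 HY HY2 HM H2 H3 Hs. unfold tri_row.
  destruct (Nat.ltb_spec 0 i); [|lia].
  assert (A1 : eps * Y <= sig * (M i (i - 1)%nat * v (i - 1)%nat)).
  { replace (sig * (M i (i - 1)%nat * v (i - 1)%nat)) with (M i (i-1)%nat * (sig * v
      (i-1)%nat)) by ring.
    apply Rmult_le_compat; lra. }
  assert (A2 : Rabs (sig * (M i i * v i)) <= K * X).
  { rewrite !Rabs_mult. rewrite (abs_unit_sign sig Hs), Rmult_1_l; apply Rmult_le_compat;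
    auto using Rabs_pos. }
  assert (A3 : Rabs (sig * (if (i + 1 <? n)%nat then M i (i + 1)%nat * v (i + 1)%nat else 0))
      <= K * X).
  { destruct (Nat.ltb_spec (i+1) n). rewrite !Rabs_mult. rewrite (abs_unit_sign sig Hs), Rmult_1_l;
    apply Rmult_le_compat; auto using Rabs_pos.
    rewrite Rmult_0_r, Rabs_R0; nra. }
  revert A2 A3. unfold Rabs. repeat destruct Rcase_abs; intros; nra.
Qed.

Lemma tri_row_lower_right n M v i K X eps Y sig : (i + 1 < n)%nat -> 0 <= K -> 0 <= X ->
  eps <= M i (i + 1)%nat -> 0 <= eps -> 0 <= Y -> Y <= sig * v (i + 1)%nat ->
  (forall j, (j < n)%nat -> Rabs (M i j) <= K) -> Rabs (v i) <= X ->
  ((0 < i)%nat -> Rabs (v (i - 1)%nat) <= X) -> (sig = 1 \/ sig = -1) ->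
  eps * Y - 2 * K * X <= sig * tri_row n M v i.
Proof.
  intros Hn HK HX He He0 HY HY2 HM H2 H3 Hs. unfold tri_row.
  destruct (Nat.ltb_spec (i + 1) n); [|lia].
  assert (A1 : eps * Y <= sig * (M i (i + 1)%nat * v (i + 1)%nat)).
  { replace (sig * (M i (i + 1)%nat * v (i + 1)%nat)) with (M i (i+1)%nat * (sig * v
      (i+1)%nat)) by ring.
    apply Rmult_le_compat; lra. }
  assert (A2 : Rabs (sig * (M i i * v i)) <= K * X).
  { rewrite !Rabs_mult. rewrite (abs_unit_sign sig Hs), Rmult_1_l; apply Rmult_le_compat;
    auto using Rabs_pos; apply HM; lia. }
  assert (A3 : Rabs (sig * (if (0 <? i)%nat then M i (i - 1)%nat * v (i - 1)%nat else 0)) <= K * X).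
  { destruct (Nat.ltb_spec 0 i). rewrite !Rabs_mult. rewrite (abs_unit_sign sig Hs), Rmult_1_l;
    apply Rmult_le_compat; auto using Rabs_pos; apply HM; lia.
    rewrite Rmult_0_r, Rabs_R0; nra. }
  revert A2 A3. unfold Rabs. repeat destruct Rcase_abs; intros; nra.
Qed.

Lemma tri_row_lower_both n M v i K X eps Y sig : (0 < i)%nat -> (i + 1 < n)%nat -> 0 <= K ->
  0 <= X ->
  eps <= M i (i - 1)%nat -> 0 <= M i (i + 1)%nat -> 0 <= eps -> 0 <= Y ->
  Y <= sig * v (i - 1)%nat ->
  0 <= sig * v (i + 1)%nat ->
  (forall j, (j < n)%nat -> Rabs (M i j) <= K) -> Rabs (v i) <= X -> (sig = 1 \/ sig = -1) ->
  eps * Y - 2 * K * X <= sig * tri_row n M v i.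
Proof.
  intros Hi Hn HK HX He He1 He0 HY HY2 HY3 HM H2 Hs. unfold tri_row.
  destruct (Nat.ltb_spec 0 i); [|lia]. destruct (Nat.ltb_spec (i + 1) n); [|lia].
  assert (A1 : eps * Y <= sig * (M i (i - 1)%nat * v (i - 1)%nat)).
  { replace (sig * (M i (i - 1)%nat * v (i - 1)%nat)) with (M i (i-1)%nat * (sig * v
      (i-1)%nat)) by ring.
    apply Rmult_le_compat; lra. }
  assert (A3 : 0 <= sig * (M i (i + 1)%nat * v (i + 1)%nat)).
  { replace (sig * (M i (i + 1)%nat * v (i + 1)%nat)) with (M i (i+1)%nat * (sig * v
      (i+1)%nat)) by ring.
    apply Rmult_le_pos; lra. }
  assert (A2 : Rabs (sig * (M i i * v i)) <= K * X).
  { rewrite !Rabs_mult. rewrite (abs_unit_sign sig Hs), Rmult_1_l; apply Rmult_le_compat;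
    auto using Rabs_pos; apply HM; lia. }
  revert A2. unfold Rabs. repeat destruct Rcase_abs; intros; nra.
Qed.

(** * The local drop of sign changes

    Induction on the distance [m] to the nonzero
    entries of [u] shows that every entry of [z s] eventually takes the sign of
    the nearest nonzero entry of [u], growing like [(s - t0)^m]. *)
Section LocalDrop.
Variables (n : nat) (B : R -> nat -> nat -> R) (z : R -> nat -> R) (K eps t0 : R).
Hypothesis Htri : tridiagonal n B.
Hypothesis HK : 0 <= K.
Hypothesis Hb : forall t i j, (i < n)%nat -> (j < n)%nat -> Rabs (B t i j) <= K.
Hypothesis Heps : 0 < eps.
Hypothesis Hoff : forall t i, (i + 1 < n)%nat -> eps <= B t i (i + 1)%nat /\
  eps <= B t (i + 1)%nat i.
Hypothesis Hsol : is_solution n B z.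
Hypothesis Hnz : exists j, (j < n)%nat /\ z t0 j <> 0.

Notation u := (z t0).

Lemma derive_z t i : (i < n)%nat -> derivable_pt_lim (fun s => z s i) t (tri_row n (B t) (z t) i).
Proof. intro; apply derive_tridiagonal; auto. Qed.

Lemma offdiag_left t i : (0 < i)%nat -> (i < n)%nat -> eps <= B t i (i - 1)%nat.
Proof. intros. destruct (Hoff t (i - 1) ltac:(lia)) as [_ h].
  replace (i - 1 + 1)%nat with i in h by lia. auto.
Qed.
Lemma offdiag_right t i : (i + 1 < n)%nat -> eps <= B t i (i + 1)%nat.
Proof. intros. apply Hoff; auto. Qed.

Lemma local_bound : exists C0, 0 < C0 /\ forall s, t0 <= s <= t0 + 1 -> forall i, (i < n)%nat ->
  Rabs (z s i) <= C0.
Proof.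
  exists (1 + sqnorm n u * exp (energy_rate n K)). split.
  - pose proof (sqnorm_nonneg n u). pose proof (exp_pos (energy_rate n K)). nra.
  - intros s Hs i Hi. eapply Rle_trans. apply abs_le_sqnorm; eauto.
    pose proof (energy_forward n B z K HK Hb Hsol t0 s ltac:(lra)).
    pose proof (sqnorm_nonneg n u).
    assert (exp (energy_rate n K * (s - t0)) <= exp (energy_rate n K)).
    { apply exp_monotone. pose proof (energy_rate_pos n K HK). nra. }
    assert (sqnorm n u * exp (energy_rate n K * (s - t0)) <= sqnorm n u * exp (energy_rate n
        K)) by (apply Rmult_le_compat_l; auto).
    lra.
Qed.

Definition min_dist i := Nat.min (dist_left n u i) (dist_right n u i).

(** One step of the vanishing-order induction: a zero entry whose neighbours
    are [O((s - t0)^m)] has derivative [O((s - t0)^m)], hence is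
    [O((s - t0)^(m+1))]. *)
Lemma vanishing_order_succ m C h : 0 < C -> 0 < h ->
  (forall i, (i < n)%nat -> (m <= min_dist i)%nat ->
     forall s, t0 <= s <= t0 + h -> Rabs (z s i) <= C * (s - t0) ^ m) ->
  forall i, (i < n)%nat -> (S m <= min_dist i)%nat ->
  forall s, t0 <= s <= t0 + h -> Rabs (z s i) <= 3 * K * C / INR (S m) * (s - t0) ^ S m.
Proof.
  intros HC Hh HU i Hi Hm s Hs. unfold min_dist in Hm.
  destruct (dist_neighbours n u i m Hi ltac:(lia) ltac:(lia)) as [Hui [HL HR]].
  assert (Hd : forall y, t0 <= y <= t0 + h ->
    Rabs (tri_row n (B y) (z y) i) <= 3 * K * (C * (y - t0) ^ m)).
  { intros y Hy. assert (0 <= (y - t0) ^ m) by (apply pow_le; lra).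
    refine (tri_row_bound n (B y) (z y) i K (C * (y - t0) ^ m) HK _ _ Hi _ _ _).
    - apply Rmult_le_pos; lra.
    - intros; apply Hb; auto.
    - intro. apply HU; auto. lia. unfold min_dist. destruct (HL ltac:(lia)); lia.
    - apply HU; auto. unfold min_dist. lia.
    - intro. apply HU; auto. unfold min_dist. destruct (HR ltac:(lia)); lia. }
  assert (H1 : - (3 * K * C) / INR (S m) * (s - t0) ^ S m <= z s i).
  { apply (integrate_lower_bound (fun y => z y i) (fun y => tri_row n (B y) (z y) i)
      t0 h (- (3 * K * C)) m); auto; try lra.
    - intros y _. apply derive_z; auto.
    - intros y Hy. specialize (Hd y Hy). revert Hd; unfold Rabs; destruct Rcase_abs; intros; nra. }
  assert (H2 : - (3 * K * C) / INR (S m) * (s - t0) ^ S m <= - z s i).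
  { apply (integrate_lower_bound (fun y => - z y i) (fun y => - tri_row n (B y) (z y) i)
      t0 h (- (3 * K * C)) m); auto; try lra.
    - intros y _. apply derivable_pt_lim_opp, derive_z; auto.
    - intros y Hy. specialize (Hd y Hy). revert Hd; unfold Rabs; destruct Rcase_abs; intros; nra. }
  assert (0 <= (s - t0) ^ S m) by (apply pow_le; lra).
  assert (E : - (3 * K * C) / INR (S m) = - (3 * K * C / INR (S m))) by (unfold Rdiv; ring).
  rewrite E in H1, H2.
  unfold Rabs; destruct Rcase_abs; nra.
Qed.

Lemma vanishing_order m : exists C h, 0 < C /\ 0 < h /\ h <= 1 /\ forall i, (i < n)%nat ->
  (m <= min_dist i)%nat -> forall s, t0 <= s <= t0 + h -> Rabs (z s i) <= C * (s - t0) ^ m.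
Proof.
  induction m.
  - destruct local_bound as [C0 [HC0 HB0]]. exists C0, 1. split; auto. split; [lra|]. split; [lra|].
    intros i Hi _ s Hs. simpl. rewrite Rmult_1_r. apply HB0; auto.
  - destruct IHm as [C [h [HC [Hh [Hh1 HU]]]]].
    assert (HINR : 0 < INR (S m)) by (apply lt_0_INR; lia).
    assert (Hq : 0 <= 3 * K * C / INR (S m)) by (apply Rdiv_le_0_compat; nra).
    exists (3 * K * C / INR (S m) + 1), h. split; [lra|]. split; auto. split; auto.
    intros i Hi Hm s Hs. eapply Rle_trans; [apply (vanishing_order_succ m C h); auto|].
    apply Rmult_le_compat_r; [apply pow_le; lra| lra].
Qed.

Definition nearest_sign_growth m c h := forall i, (i < n)%nat -> forall s, t0 <= s <= t0 + h ->
   (dist_left n u i = m -> (m < dist_right n u i)%nat ->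
   c * (s - t0) ^ m <= rsign (u (left_nz u i)) * z s i) /\
   (dist_right n u i = m -> (m < dist_left n u i)%nat ->
   c * (s - t0) ^ m <= rsign (u (right_nz n u i)) * z s i) /\
   (dist_left n u i = m -> dist_right n u i = m -> 0 < u (left_nz u i) * u (right_nz n u i) ->
      c * (s - t0) ^ m <= rsign (u (left_nz u i)) * z s i).

Lemma nearest_sign_growth_shrink m c h h' : 0 < h' <= h -> nearest_sign_growth m c h ->
  nearest_sign_growth m c h'.
Proof. intros Hh H i Hi s Hs. apply H; auto; lra. Qed.

Lemma nearest_sign_growth_0 : exists c h, 0 < c /\ 0 < h /\ nearest_sign_growth 0 c h.
Proof.
  set (mu := min_nonzero_abs u n). assert (Hmu : 0 < mu) by apply min_nonzero_abs_pos.
  destruct (finite_common_delta n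
    (fun i d => forall y, Rabs (y - t0) < d -> Rabs (z y i - z t0 i) < mu / 2))
    as [d [Hd Hdd]].
  - intros i d d' Hd' H y Hy. apply H; lra.
  - intros i Hi. apply (continuous_of_deriv _ _ _ (derive_z t0 i Hi)). lra.
  - exists (mu / 2), (d / 2). split. lra. split. lra.
    intros i Hi s Hs. split; [|split].
    + intros H1 H2. destruct (dist_left_0 n u i Hi H1). rewrite dist_right_nonzero in H2; auto; lia.
    + intros H1 H2. destruct (dist_right_0 n u i Hi H1). rewrite dist_left_nonzero in H2; auto; lia.
    + intros H1 _ _. destruct (dist_left_0 n u i Hi H1) as [Hu Hl]. rewrite Hl. simpl.
      rewrite Rmult_1_r.
      assert (Rabs (z s i - z t0 i) < mu / 2) by (apply Hdd; auto; unfold Rabs; destruct Rcase_abs;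
      lra).
      pose proof (min_nonzero_abs_le u n i Hi Hu). fold mu in H0. pose proof (rsign_abs (z t0 i)).
      replace (rsign (z t0 i) * z s i)
        with (rsign (z t0 i) * z t0 i + rsign (z t0 i) * (z s i - z t0 i)) by ring.
      destruct (rsign_cases (z t0 i)) as [S|S]; rewrite S in *;
      revert H; unfold Rabs; repeat destruct Rcase_abs; intros; lra.
Qed.

Lemma absorb_error eps' c K' C d P : 0 <= K' -> 0 <= C -> 0 < eps' -> 0 < c -> 0 <= d -> 0 <= P ->
  d <= eps' * c / (4 * (K' * C + 1)) ->
  eps' * c / 2 * P <= eps' * (c * P) - 2 * K' * (C * (P * d)).
Proof.
  intros. assert (0 < K' * C + 1) by nra.
  assert (4 * (K' * C + 1) * d <= eps' * c).
  { apply Rmult_le_compat_l with (r := 4 * (K' * C + 1)) in H5; [|lra].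
    replace (4 * (K' * C + 1) * (eps' * c / (4 * (K' * C + 1)))) with (eps' * c) in H5 by (field;
    lra). lra. }
  assert (0 <= K' * C * d) by (apply Rmult_le_pos; nra).
  nra.
Qed.

(** Near [t0] the
    entry [z i] with a nonzero neighbour-at-distance-[m] is driven by the
    off-diagonal term [eps * c (s - t0)^m], which dominates the remaining
    terms, of size [O((s - t0)^(m+1))]; integrating gives growth of order
    [(s - t0)^(m+1)] with the sign of the nearest nonzero entry of [u]. *)
Section GrowthStep.
Variables (m : nat) (c h C hh : R).
Hypothesis Hc : 0 < c.
Hypothesis HL : nearest_sign_growth m c h.
Hypothesis HC : 0 < C.
Hypothesis HU : forall i, (i < n)%nat -> (S m <= min_dist i)%nat ->
  forall s, t0 <= s <= t0 + hh -> Rabs (z s i) <= C * (s - t0) ^ S m.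
Hypothesis Hhh : 0 < hh.
Hypothesis Hhh_h : hh <= h.
Hypothesis Hhh_small : hh <= eps * c / (4 * (K * C + 1)).

Lemma step_integrate i sig : (i < n)%nat -> u i = 0 ->
  (forall y, t0 <= y <= t0 + hh -> eps * c / 2 * (y - t0) ^ m <= sig * tri_row n (B y) (z y) i) ->
  forall s, t0 <= s <= t0 + hh -> eps * c / 2 / INR (S m) * (s - t0) ^ S m <= sig * z s i.
Proof.
  intros Hi Hui Hd s Hss.
  apply (integrate_lower_bound (fun y => sig * z y i) (fun y => sig * tri_row n (B y) (z y) i)
    t0 hh (eps * c / 2) m); auto; try lra.
  - intros y _. apply derivable_pt_lim_scal. apply derive_z; auto.
  - rewrite Hui; ring.
Qed.

Lemma step_small i y : (i < n)%nat -> (S m <= min_dist i)%nat -> t0 <= y <= t0 + hh ->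
  Rabs (z y i) <= C * ((y - t0) ^ m * (y - t0)).
Proof.
  intros Hi HD Hy. rewrite <- (Rmult_comm (y - t0)).
  change ((y - t0) * (y - t0) ^ m) with ((y - t0) ^ S m). apply HU; auto; lra.
Qed.

Lemma step_left_neighbour i : (i < n)%nat -> dist_left n u i = S m ->
  (S m <= dist_right n u i)%nat -> forall y, t0 <= y <= t0 + hh ->
  c * (y - t0) ^ m <= rsign (u (left_nz u i)) * z y (i - 1)%nat.
Proof.
  intros Hi H1 H2 y Hy.
  destruct (dist_left_pred n u Hnz i m Hi H1 H2) as [Hi1 [Hui [ELp Hdisj]]].
  rewrite <- ELp. destruct Hdisj as [[Z [Em El]]|[Z [D1 D2]]].
  - subst m. destruct (HL (i-1)%nat ltac:(lia) y ltac:(lra)) as [_ [_ H3]].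
    apply H3.
    + apply dist_left_nonzero; auto.
    + apply dist_right_nonzero; auto; lia.
    + rewrite left_nz_self, right_nz_self by (auto; lia). apply Rsqr_pos_lt in Z; exact Z.
  - destruct (HL (i-1)%nat ltac:(lia) y ltac:(lra)) as [H3 _]. apply H3; auto.
Qed.

Lemma step_right_neighbour i : (i < n)%nat -> dist_right n u i = S m ->
  (S m <= dist_left n u i)%nat -> forall y, t0 <= y <= t0 + hh ->
  c * (y - t0) ^ m <= rsign (u (right_nz n u i)) * z y (i + 1)%nat.
Proof.
  intros Hi H1 H2 y Hy.
  destruct (dist_right_succ n u Hnz i m Hi H1 H2) as [Hi1 [Hui [ERp Hdisj]]].
  rewrite <- ERp. destruct Hdisj as [[Z [Em El]]|[Z [D1 D2]]].
  - subst m. destruct (HL (i+1)%nat ltac:(lia) y ltac:(lra)) as [_ [_ H3]].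
    rewrite (right_nz_self n u (i+1)) by (auto; lia).
    rewrite <- (left_nz_self u (i+1)) at 1 by auto.
    apply H3.
    + apply dist_left_nonzero; auto.
    + apply dist_right_nonzero; auto; lia.
    + rewrite left_nz_self, right_nz_self by (auto; lia). apply Rsqr_pos_lt in Z; exact Z.
  - destruct (HL (i+1)%nat ltac:(lia) y ltac:(lra)) as [_ [H3 _]]. apply H3; auto.
Qed.

Local Ltac row_side :=
  try solve [lia | lra | apply rsign_cases | (intros; apply Hb; auto)
    | (apply Rmult_le_pos; [lra| apply Rmult_le_pos; [apply pow_le; lra| lra]])
    | (apply Rmult_le_pos; [lra| apply pow_le; lra])
    | (apply offdiag_left; auto; lia) | (apply offdiag_right; auto)
    | (apply step_small; auto; unfold min_dist; lia)].

Lemma step_absorb y : t0 <= y <= t0 + hh ->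
  eps * c / 2 * (y - t0) ^ m <=
  eps * (c * (y - t0) ^ m) - 2 * K * (C * ((y - t0) ^ m * (y - t0))).
Proof. intros Hy. apply absorb_error; auto; try lra. apply pow_le; lra. Qed.

Lemma step_left i : (i < n)%nat -> dist_left n u i = S m -> (S m < dist_right n u i)%nat ->
  forall s, t0 <= s <= t0 + hh ->
  eps * c / 2 / INR (S m) * (s - t0) ^ S m <= rsign (u (left_nz u i)) * z s i.
Proof.
  intros Hi H1 H2.
  destruct (dist_left_pred n u Hnz i m Hi H1 ltac:(lia)) as [Hi1 [Hui _]].
  apply step_integrate; auto. intros y Hy.
  pose proof (step_left_neighbour i Hi H1 ltac:(lia) y Hy) as HN.
  eapply Rle_trans; [apply (step_absorb y Hy)|].
  apply (tri_row_lower_left n (B y) (z y) i K (C * ((y - t0) ^ m * (y - t0))) eps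
    (c * (y - t0) ^ m)); row_side.
  intro. apply step_small; auto.
  destruct (dist_left_succ_ge n u i ltac:(lia) ltac:(lia)). unfold min_dist; lia.
Qed.

Lemma step_right i : (i < n)%nat -> dist_right n u i = S m -> (S m < dist_left n u i)%nat ->
  forall s, t0 <= s <= t0 + hh ->
  eps * c / 2 / INR (S m) * (s - t0) ^ S m <= rsign (u (right_nz n u i)) * z s i.
Proof.
  intros Hi H1 H2.
  destruct (dist_right_succ n u Hnz i m Hi H1 ltac:(lia)) as [Hi1 [Hui _]].
  apply step_integrate; auto. intros y Hy.
  pose proof (step_right_neighbour i Hi H1 ltac:(lia) y Hy) as HN.
  eapply Rle_trans; [apply (step_absorb y Hy)|].
  apply (tri_row_lower_right n (B y) (z y) i K (C * ((y - t0) ^ m * (y - t0))) eps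
    (c * (y - t0) ^ m)); row_side.
  intro. apply step_small; auto; try lia.
  destruct (dist_right_pred_ge n u i ltac:(lia) Hi ltac:(lia)). unfold min_dist; lia.
Qed.

Lemma step_equal i : (i < n)%nat -> dist_left n u i = S m -> dist_right n u i = S m ->
  0 < u (left_nz u i) * u (right_nz n u i) ->
  forall s, t0 <= s <= t0 + hh ->
  eps * c / 2 / INR (S m) * (s - t0) ^ S m <= rsign (u (left_nz u i)) * z s i.
Proof.
  intros Hi H1 H2 H3.
  destruct (dist_left_pred n u Hnz i m Hi H1 ltac:(lia)) as [Hi1 [Hui _]].
  destruct (dist_right_succ n u Hnz i m Hi H2 ltac:(lia)) as [Hi2 _].
  assert (Esg : rsign (u (right_nz n u i)) = rsign (u (left_nz u i)))
    by (symmetry; apply rsign_same; auto).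
  apply step_integrate; auto. intros y Hy.
  pose proof (step_left_neighbour i Hi H1 ltac:(lia) y Hy) as HN.
  pose proof (step_right_neighbour i Hi H2 ltac:(lia) y Hy) as HN2.
  rewrite Esg in HN2.
  assert (0 <= c * (y - t0) ^ m) by (apply Rmult_le_pos; [lra| apply pow_le; lra]).
  eapply Rle_trans; [apply (step_absorb y Hy)|].
  apply (tri_row_lower_both n (B y) (z y) i K (C * ((y - t0) ^ m * (y - t0))) eps
    (c * (y - t0) ^ m)); row_side.
  pose proof (offdiag_right y i ltac:(lia)); lra.
Qed.
End GrowthStep.

Lemma nearest_sign_growth_succ m c h : 0 < c -> 0 < h -> nearest_sign_growth m c h ->
  exists c' h', 0 < c' /\ 0 < h' /\ nearest_sign_growth (S m) c' h'.
Proof.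
  intros Hc Hh HL.
  destruct (vanishing_order (S m)) as [C [h2 [HC [Hh2 [Hh21 HU]]]]].
  set (h3 := eps * c / (4 * (K * C + 1))).
  assert (Hh3 : 0 < h3) by (unfold h3; apply Rdiv_lt_0_compat; nra).
  set (hh := Rmin h (Rmin h2 h3)).
  assert (Hhh : 0 < hh) by (unfold hh; repeat apply Rmin_glb_lt; auto).
  assert (hh1 : hh <= h) by apply Rmin_l.
  assert (hh2 : hh <= h2) by (unfold hh; eapply Rle_trans; [apply Rmin_r| apply Rmin_l]).
  assert (hh3 : hh <= h3) by (unfold hh; eapply Rle_trans; [apply Rmin_r| apply Rmin_r]).
  assert (HU' : forall i, (i < n)%nat -> (S m <= min_dist i)%nat ->
    forall s, t0 <= s <= t0 + hh -> Rabs (z s i) <= C * (s - t0) ^ S m)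
    by (intros; apply HU; auto; lra).
  assert (HINR : 0 < INR (S m)) by (apply lt_0_INR; lia).
  exists (eps * c / 2 / INR (S m)), hh. split; [apply Rdiv_lt_0_compat; auto; nra|]. split; auto.
  intros i Hi s Hs. split; [|split].
  - intros H1 H2. exact (step_left m c h C hh Hc HL HC HU' Hhh hh1 hh3 i Hi H1 H2 s Hs).
  - intros H1 H2. exact (step_right m c h C hh Hc HL HC HU' Hhh hh1 hh3 i Hi H1 H2 s Hs).
  - intros H1 H2 H3. exact (step_equal m c h C hh Hc HL HC HU' Hhh hh1 hh3 i Hi H1 H2 H3 s Hs).
Qed.

Lemma nearest_sign_growth_all m : exists c h, 0 < c /\ 0 < h /\ nearest_sign_growth m c h.
Proof.
  induction m. apply nearest_sign_growth_0.
  destruct IHm as [c [h [Hc [Hh HL]]]]. apply (nearest_sign_growth_succ m c h); auto.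
Qed.

Lemma nearest_sign_right : exists d, 0 < d /\ forall s, t0 < s <= t0 + d -> nearest_sign n u (z s).
Proof.
  destruct (finite_common_delta (S n)
    (fun m d => exists c, 0 < c /\ nearest_sign_growth m c d)) as [d [Hd Hdd]].
  - intros m d d' Hd' [c [Hc H]]. exists c; split; auto. eapply nearest_sign_growth_shrink; eauto.
  - intros m _. destruct (nearest_sign_growth_all m) as [c [h [Hc [Hh H]]]]. exists h; split; auto.
    exists c; auto.
  - exists d. split; auto. intros s Hs i Hi.
    assert (Pp : forall m, 0 < (s - t0) ^ m) by (intro; apply pow_lt; lra).
    pose proof (dist_left_le n u i Hi) as Q1. pose proof (dist_right_le n u i ltac:(lia)) as Q2.
    split; [|split].
    + intro H. destruct (Hdd (dist_left n u i) ltac:(lia)) as [c [Hc HL]].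
      destruct (HL i Hi s ltac:(lra)) as [H1 _]. specialize (H1 eq_refl H).
      destruct (dist_left_finite n u i Hi ltac:(lia)) as [Hu _].
      apply rsign_prod; auto. pose proof (Pp (dist_left n u i)). nra.
    + intro H. destruct (Hdd (dist_right n u i) ltac:(lia)) as [c [Hc HL]].
      destruct (HL i Hi s ltac:(lra)) as [_ [H1 _]]. specialize (H1 eq_refl H).
      destruct (dist_right_finite n u i ltac:(lia)) as [Hr _].
      apply rsign_prod; auto. apply right_nz_nonzero; auto. pose proof (Pp (dist_right n u i)). nra.
    + intros H Hp.
      assert (Hu : u (left_nz u i) <> 0) by (intro E; rewrite E in Hp; lra).
      assert (HLn : (dist_left n u i < n)%nat).
      { unfold dist_left, has_left_nz. destruct Req_EM_T. contradiction.
        pose proof (left_nz_le u i). lia. }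
      destruct (Hdd (dist_left n u i) ltac:(lia)) as [c [Hc HL]].
      destruct (HL i Hi s ltac:(lra)) as [_ [_ H1]]. specialize (H1 eq_refl (eq_sym H) Hp).
      apply rsign_prod; auto. pose proof (Pp (dist_left n u i)). nra.
Qed.

Lemma forward_drop : exists d, 0 < d /\ forall s, t0 < s <= t0 + d ->
  forall k, Smax_ge n (z s) k -> Smin_ge n (z t0) k.
Proof.
  destruct nearest_sign_right as [d [Hd H]]. exists d. split; auto. intros s Hs k HW.
  apply (Smin_ge_of_nearest_sign n u (z s) k); auto.
Qed.
End LocalDrop.

(** * Time reversal and the backward drop *)

Lemma pow_m1_odd i : (-1) ^ (i + (i + 1)) = -1.
Proof. rewrite pow_add, pow_add, <- Rmult_assoc, pow_m1_sq. simpl. ring. Qed.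

Section TimeReversal.
Variables (n : nat) (A : R -> nat -> nat -> R) (x : R -> nat -> R) (K eps t0 : R).
Hypothesis Htri : tridiagonal n A.
Hypothesis HK : 0 <= K.
Hypothesis Hb : forall t i j, (i < n)%nat -> (j < n)%nat -> Rabs (A t i j) <= K.
Hypothesis Heps : 0 < eps.
Hypothesis Hoff : forall t i, (i + 1 < n)%nat -> eps <= A t i (i + 1)%nat /\
  eps <= A t (i + 1)%nat i.
Hypothesis Hsol : is_solution n A x.
Hypothesis Hnz : exists j, (j < n)%nat /\ x t0 j <> 0.

(** Reversing time: [tau |-> D x(t0 - tau)] solves a tridiagonal system with
    matrix [-D A(t0 - tau) D], whose off-diagonal entries are again [>= eps]. *)
Definition reversed_solution (tau : R) (i : nat) : R := (-1) ^ i * x (t0 - tau) i.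
Definition reversed_matrix (tau : R) (i j : nat) : R := - ((-1) ^ (i + j)) * A (t0 - tau) i j.

Lemma reversed_solves : is_solution n reversed_matrix reversed_solution.
Proof.
  intros tau i Hi.
  assert (E : matvec n (reversed_matrix tau) (reversed_solution tau) i = (-1) ^ i * (matvec n
      (A (t0 - tau)) (x (t0 - tau)) i * -1)).
  { unfold matvec, reversed_matrix, reversed_solution.
    match goal with |- _ = (-1) ^ i * (sumR n ?f * -1) =>
      replace ((-1) ^ i * (sumR n f * -1)) with (((-1) ^ i * -1) * sumR n f) by ring end.
    rewrite <- sumR_scal. apply sumR_ext.
    intros j Hj. rewrite pow_add.
    replace (- ((-1) ^ i * (-1) ^ j) * A (t0 - tau) i j * ((-1) ^ j * x (t0 - tau) j)) with
      (- ((-1) ^ i * ((-1) ^ j * (-1) ^ j)) * A (t0 - tau) i j * x (t0 - tau) j) by ring.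
    rewrite pow_m1_sq. ring. }
  rewrite E. unfold reversed_solution. apply derivable_pt_lim_scal.
  apply (derivable_pt_lim_comp (fun s => t0 - s) (fun s => x s i)).
  - replace (-1) with (0 - 1) by ring. apply derivable_pt_lim_minus.
    apply derivable_pt_lim_const. apply derivable_pt_lim_id.
  - apply Hsol; auto.
Qed.

Lemma reversed_tridiagonal : tridiagonal n reversed_matrix.
Proof. intros t i j Hi Hj H. unfold reversed_matrix. rewrite Htri; auto. ring. Qed.
Lemma reversed_bounded : forall t i j, (i < n)%nat -> (j < n)%nat ->
  Rabs (reversed_matrix t i j) <= K.
Proof. intros. unfold reversed_matrix. rewrite Rabs_mult, Rabs_Ropp, pow_1_abs, Rmult_1_l. auto.
  Qed.
Lemma reversed_offdiag : forall t i, (i + 1 < n)%nat -> eps <= reversed_matrix t i (i + 1)%nat /\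
  eps <= reversed_matrix t (i + 1)%nat i.
Proof.
  intros t i H. unfold reversed_matrix. rewrite pow_m1_odd.
  replace (i + 1 + i)%nat with (i + (i + 1))%nat by lia. rewrite pow_m1_odd.
  destruct (Hoff (t0 - t) i H). split; lra.
Qed.

Lemma reversed_nonzero : exists j, (j < n)%nat /\ reversed_solution 0 j <> 0.
Proof.
  destruct Hnz as [j [Hj H]]. exists j. split; auto. unfold reversed_solution. rewrite Rminus_0_r.
  intro E. apply Rmult_integral in E as [E|E]; auto.
  apply (pow_nonzero (-1) j); auto; lra.
Qed.

Lemma backward_drop : exists d, 0 < d /\ forall s, t0 - d <= s < t0 ->
  forall k, Smax_ge n (x t0) k -> Smin_ge n (x s) k.
Proof.
  destruct (forward_drop n reversed_matrix reversed_solution K eps 0 reversed_tridiagonal HK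
      reversed_bounded Heps reversed_offdiag reversed_solves reversed_nonzero) as [d [Hd H]].
  exists d. split; auto. intros s Hs k HW.
  assert (Hn : (1 <= n)%nat) by (destruct Hnz as [j [Hj _]]; lia).
  assert (Hk : (k <= n)%nat).
  { destruct HW as [c [_ Hc]]. pose proof (changes_le n c). lia. }
  (* [S^+(D x s) >= n - k] would give [S^-(D x t0) >= n - k] by the forward
     drop of the reversed solution, contradicting [S^+(x t0) >= k]. *)
  apply not_Smax_alternate_Smin; auto. intro HW2.
  apply (Smax_not_Smin_alternate n (x t0) k Hn HW).
  apply (Smin_ge_ext n (reversed_solution 0)).
  - intros j Hj. unfold reversed_solution, alternate. rewrite Rminus_0_r. auto.
  - apply (H (t0 - s) ltac:(lra)).
    apply (Smax_ge_ext n (alternate (x s))); auto.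
    intros j Hj. unfold reversed_solution, alternate.
    replace (t0 - (t0 - s)) with s by ring. auto.
Qed.
End TimeReversal.

(** * [S^-] is nonincreasing along a nontrivial solution *)

Section Monotonicity.
Variables (n : nat) (A : R -> nat -> nat -> R) (x : R -> nat -> R) (K eps : R).
Hypothesis Htri : tridiagonal n A.
Hypothesis HK : 0 <= K.
Hypothesis Hb : forall t i j, (i < n)%nat -> (j < n)%nat -> Rabs (A t i j) <= K.
Hypothesis Heps : 0 < eps.
Hypothesis Hoff : forall t i, (i + 1 < n)%nat -> eps <= A t i (i + 1)%nat /\
  eps <= A t (i + 1)%nat i.
Hypothesis Hsol : is_solution n A x.
Hypothesis Hnz : forall t, exists j, (j < n)%nat /\ x t j <> 0.

Lemma Smin_ge_time_open t k : Smin_ge n (x t) k -> exists eta, 0 < eta /\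
  forall s, Rabs (s - t) < eta -> Smin_ge n (x s) k.
Proof.
  intro H. destruct (Smin_ge_open n (x t) k H) as [e [He Ho]].
  destruct (finite_common_delta n
    (fun i d => forall s, Rabs (s - t) < d -> Rabs (x s i - x t i) < e)) as [d [Hd Hdd]].
  - intros i d d' Hd' Hp s Hs. apply Hp; lra.
  - intros i Hi. apply (continuous_of_deriv _ _ _ (Hsol t i Hi)); auto.
  - exists d. split; [auto|]. intros s Hs. apply Ho. intros j Hj. apply Hdd; auto.
Qed.

Lemma forward_drop_at t0 : exists d, 0 < d /\ forall s, t0 < s <= t0 + d ->
  forall k, Smax_ge n (x s) k -> Smin_ge n (x t0) k.
Proof. apply (forward_drop n A x K eps t0); auto. Qed.

Lemma backward_drop_at t0 : exists d, 0 < d /\ forall s, t0 - d <= s < t0 ->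
  forall k, Smax_ge n (x t0) k -> Smin_ge n (x s) k.
Proof. apply (backward_drop n A x K eps t0); auto. Qed.

(** [S^-(x t)] is nonincreasing in [t]: [S^-(x t2) >= k] implies
    [S^-(x t1) >= k] for [t1 <= t2] (a continuity argument on the supremum of
    the times where it fails). *)
Lemma Smin_ge_backward k t1 t2 : t1 <= t2 -> Smin_ge n (x t2) k -> Smin_ge n (x t1) k.
Proof.
  intros H12 H2. apply NNPP; intro N1.
  set (E := fun s => t1 <= s <= t2 /\ ~ Smin_ge n (x s) k).
  assert (Eb : bound E) by (exists t2; intros s [Hs _]; lra).
  assert (Ene : exists s, E s) by (exists t1; split; auto; lra).
  destruct (completeness E Eb Ene) as [m [Hub Hl]].
  assert (Hm1 : t1 <= m) by (apply Hub; split; auto; lra).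
  assert (Hm2 : m <= t2) by (apply Hl; intros s [Hs _]; lra).
  destruct (classic (Smin_ge n (x m) k)) as [Am|Am].
  - destruct (Smin_ge_time_open m k Am) as [eta [He Ho]].
    assert (Hex : exists s, E s /\ m - eta / 2 < s).
    { apply NNPP; intro N. assert (m <= m - eta / 2).
      { apply Hl. intros s Es. apply Rnot_lt_le. intro. apply N. exists s; auto. }
      lra. }
    destruct Hex as [s [[Hs Ns] Hs2]]. apply Ns. apply Ho.
    assert (s <= m) by (apply Hub; split; auto).
    unfold Rabs; destruct Rcase_abs; lra.
  - destruct (Req_dec m t2) as [Em|Em]. subst m; contradiction.
    destruct (forward_drop_at m) as [d [Hd Hf]].
    set (w := Rmin d (t2 - m)).
    assert (Hw : 0 < w) by (apply Rmin_glb_lt; lra).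
    assert (Hw1 : w <= d) by apply Rmin_l. assert (Hw2 : w <= t2 - m) by apply Rmin_r.
    assert (Es : E (m + w / 2)).
    { split. lra. intro A2. apply Am. apply (Hf (m + w / 2)). lra. apply Smin_Smax_ge; auto. }
    pose proof (Hub _ Es). lra.
Qed.
End Monotonicity.

(** * Continuous dependence on the matrix *)

Lemma sumR_minus k f g : sumR k f - sumR k g = sumR k (fun j => f j - g j).
Proof. induction k; simpl; [ring| rewrite <- IHk; ring]. Qed.

Lemma diff_deriv_bound n (M1 M2 : nat -> nat -> R) (y z : nat -> R) K e : 0 <= K -> 0 <= e ->
  (forall i j, (i < n)%nat -> (j < n)%nat -> Rabs (M2 i j) <= K) ->
  (forall i j, (i < n)%nat -> (j < n)%nat -> Rabs (M1 i j - M2 i j) <= e) ->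
  Rabs (sumR n (fun i => 2 * ((y i - z i) * (matvec n M1 y i - matvec n M2 z i)))) <=
  (2 * K * INR n + e * INR n) * sqnorm n (fun i => y i - z i) + e * INR n * sqnorm n y.
Proof.
  intros HK He H2 H12.
  set (d := fun i => y i - z i).
  assert (E : sumR n (fun i => 2 * ((y i - z i) * (matvec n M1 y i - matvec n M2 z i))) =
    2 * sumR n (fun i => d i * sumR n (fun j => M2 i j * d j)) +
    2 * sumR n (fun i => d i * sumR n (fun j => (M1 i j - M2 i j) * y j))).
  { rewrite <- !sumR_scal, <- sumR_plus. apply sumR_ext. intros i Hi. unfold matvec.
    rewrite sumR_minus.
    replace (sumR n (fun j => M1 i j * y j - M2 i j * z j)) with
      (sumR n (fun j => M2 i j * d j) + sumR n (fun j => (M1 i j - M2 i j) * y j)).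
    unfold d; ring. rewrite <- sumR_plus. apply sumR_ext. intros; unfold d; ring. }
  rewrite E.
  pose proof (bilinear_bound n M2 K d d HK H2).
  pose proof (bilinear_bound n (fun i j => M1 i j - M2 i j) e d y He H12).
  fold d. pose proof (sqnorm_nonneg n d). pose proof (sqnorm_nonneg n y). pose proof (pos_INR n).
  eapply Rle_trans. apply Rabs_triang. rewrite !Rabs_mult, Rabs_pos_eq by lra.
  assert (K * INR n * (sqnorm n d + sqnorm n d) / 2 = K * INR n * sqnorm n d) by field.
  assert (e * INR n * (sqnorm n d + sqnorm n y) / 2 <= e * INR n * sqnorm n d + e * INR n *
      sqnorm n y).
  { assert (0 <= e * INR n) by nra. nra. }
  nra.
Qed.

Lemma sqnorm_cv n (a : nat -> nat -> R) b : (forall i, (i < n)%nat ->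
  Un_cv (fun m => a m i) (b i)) ->
  Un_cv (fun m => sqnorm n (fun i => a m i - b i)) 0.
Proof.
  induction n; intro H.
  - intros e He. exists 0%nat. intros m _. unfold sqnorm; simpl. unfold R_dist.
    rewrite Rminus_0_r, Rabs_R0; auto.
  - unfold sqnorm; simpl. replace 0 with (0 + 0 * 0) by ring.
    apply CV_plus. apply IHn; intros; apply H; lia.
    assert (C : Un_cv (fun m => a m n - b n) 0).
    { replace 0 with (b n - b n) by ring. apply CV_minus. apply H; lia.
      intros e He. exists 0%nat. intros. unfold R_dist. rewrite Rminus_diag, Rabs_R0; auto. }
    apply CV_mult; auto.
Qed.

Lemma sqnorm_le_diff n a b : sqnorm n a <= 2 * sqnorm n (fun i => a i - b i) + 2 * sqnorm n b.
Proof.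
  unfold sqnorm. rewrite <- !sumR_scal, <- sumR_plus. apply sumR_le. intros j _.
  pose proof (Rle_0_sqr (a j - 2 * b j)); unfold Rsqr in *; nra.
Qed.

Lemma derive_shift (f : R -> R) l c s : derivable_pt_lim f (s + c) l ->
  derivable_pt_lim (fun y => f (y + c)) s l.
Proof.
  intro H. replace l with (l * 1) by ring.
  apply (derivable_pt_lim_comp (fun y => y + c) f). replace 1 with (1 + 0) by ring.
  apply derivable_pt_lim_plus. apply derivable_pt_lim_id. apply derivable_pt_lim_const. auto.
Qed.

Lemma abs_lt_of_sqnorm_lt n a i e : (i < n)%nat -> 0 < e -> sqnorm n a < e * e -> Rabs (a i) < e.
Proof.
  intros Hi He H. pose proof (sqnorm_ge n a i Hi).
  assert (Hab : Rabs (a i) * Rabs (a i) = a i * a i)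
    by (rewrite <- Rabs_mult; apply Rabs_pos_eq; nra).
  destruct (Rlt_or_le (Rabs (a i)) e); auto. pose proof (Rabs_pos (a i)). nra.
Qed.

(** Choosing the closeness [e] of the matrices so that the forcing term
    [e P / c] of the gap stays below [a / (4 G)]. *)
Lemma error_budget e c G P a : 0 < c -> 0 < G -> 0 <= P -> 0 <= a -> 0 <= e ->
  e <= c * a / (4 * G * (P + 1)) -> e * P / c <= a / (4 * G).
Proof.
  intros Hc HG HP Ha He H.
  apply Rmult_le_compat_r with (r := P / c) in H; [|apply Rdiv_le_0_compat; lra].
  replace (e * P / c) with (e * (P / c)) by (field; lra).
  eapply Rle_trans; [exact H|].
  replace (c * a / (4 * G * (P + 1)) * (P / c)) with (a / (4 * G) * (P / (P + 1))) by (field; lra).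
  assert (P / (P + 1) <= 1).
  { apply Rmult_le_reg_r with (P + 1); [lra|]. unfold Rdiv. rewrite Rmult_assoc, Rinv_l by lra.
    lra. }
  assert (0 <= a / (4 * G)) by (apply Rdiv_le_0_compat; lra). nra.
Qed.

Section ContinuousDependence.
Variables (n : nat) (A Astar : R -> nat -> nat -> R) (x xstar : R -> nat -> R) (tk : nat -> R)
    (xs : nat -> R) (K : R).
Hypothesis HK : 0 <= K.
Hypothesis Hb : forall t i j, (i < n)%nat -> (j < n)%nat -> Rabs (A t i j) <= K.
Hypothesis HbS : forall t i j, (i < n)%nat -> (j < n)%nat -> Rabs (Astar t i j) <= K.
Hypothesis Hsol : is_solution n A x.
Hypothesis HsolS : is_solution n Astar xstar.
Hypothesis Hcv : forall i, (i < n)%nat -> Un_cv (fun m => x (tk m) i) (xs i).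
Hypothesis Hx0 : forall i, (i < n)%nat -> xstar 0 i = xs i.
Hypothesis Hunif : forall a b e, 0 < e -> exists N : nat, forall k, (N <= k)%nat ->
     forall t i j, a <= t <= b -> (i < n)%nat -> (j < n)%nat ->
       Rabs (A (t + tk k) i j - Astar t i j) < e.

Definition shifted (m : nat) (s : R) (i : nat) : R := x (s + tk m) i.
Definition gap (m : nat) (s : R) : R := sqnorm n (fun i => shifted m s i - xstar s i).

Lemma shifted_solves m : is_solution n (fun s => A (s + tk m)) (shifted m).
Proof. intros s i Hi. unfold shifted. apply (derive_shift (fun y => x y i)). apply Hsol; auto. Qed.

Definition gap_slope (m : nat) (s : R) : R :=
  sumR n (fun i => 2 * ((shifted m s i - xstar s i) *
     (matvec n (A (s + tk m)) (shifted m s) i - matvec n (Astar s) (xstar s) i))).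

Lemma gap_deriv m s : derivable_pt_lim (gap m) s (gap_slope m s).
Proof.
  unfold gap, gap_slope, sqnorm.
  apply (derive_sumR n (fun i s => (shifted m s i - xstar s i) * (shifted m s i - xstar s i))).
  intros i Hi.
  set (dd := matvec n (A (s + tk m)) (shifted m s) i - matvec n (Astar s) (xstar s) i).
  replace (2 * ((shifted m s i - xstar s i) * dd))
    with (dd * (shifted m s i - xstar s i) + (shifted m s i - xstar s i) * dd) by ring.
  apply (derivable_pt_lim_mult (fun s => shifted m s i - xstar s i)
    (fun s => shifted m s i - xstar s i));
  apply (derivable_pt_lim_minus (fun s => shifted m s i) (fun s => xstar s i)).
  all: try apply (shifted_solves m s i Hi). all: apply HsolS; auto.
Qed.

Lemma gap_at_0 m : gap m 0 = sqnorm n (fun i => x (tk m) i - xs i).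
Proof. unfold gap, sqnorm. apply sumR_ext. intros j Hj. unfold shifted. rewrite Rplus_0_l, Hx0;
  auto.
Qed.

Lemma shifted_bounded m T s : gap m 0 < 1 -> Rabs s <= T ->
  sqnorm n (shifted m s) <= (2 + 2 * sqnorm n xs) * exp (energy_rate n K * T).
Proof.
  intros H0 Hs.
  assert (Y0 : sqnorm n (shifted m 0) <= 2 + 2 * sqnorm n xs).
  { pose proof (sqnorm_le_diff n (shifted m 0) xs).
    assert (sqnorm n (fun i => shifted m 0 i - xs i) = gap m 0).
    { unfold gap, sqnorm. apply sumR_ext. intros j Hj. rewrite Hx0; auto. }
    lra. }
  assert (Hb' : forall t i j, (i < n)%nat -> (j < n)%nat -> Rabs (A (t + tk m) i j) <= K) by auto.
  pose proof (energy_abs n _ _ K HK Hb' (shifted_solves m) 0 s) as E.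
  rewrite Rminus_0_r in E.
  assert (exp (energy_rate n K * Rabs s) <= exp (energy_rate n K * T))
    by (apply exp_monotone; pose proof (energy_rate_pos n K HK); nra).
  pose proof (exp_pos (energy_rate n K * Rabs s)). pose proof (sqnorm_nonneg n (shifted m 0)).
  pose proof (sqnorm_nonneg n xs). nra.
Qed.

Lemma gap_slope_bound m T e s : 0 < e <= 1 -> gap m 0 < 1 ->
  (forall i j, (i < n)%nat -> (j < n)%nat -> Rabs (A (s + tk m) i j - Astar s i j) < e) ->
  Rabs s <= T ->
  Rabs (gap_slope m s) <= (2 * K * INR n + INR n + 1) * gap m s +
    e * INR n * ((2 + 2 * sqnorm n xs) * exp (energy_rate n K * T)).
Proof.
  intros He H0 Hclose Hs. unfold gap_slope. eapply Rle_trans.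
  { apply (diff_deriv_bound n (A (s + tk m)) (Astar s) (shifted m s) (xstar s) K e HK ltac:(lra)).
    - intros; apply HbS; auto.
    - intros; left; apply Hclose; auto. }
  pose proof (sqnorm_nonneg n (fun i => shifted m s i - xstar s i)). fold (gap m s).
  pose proof (shifted_bounded m T s H0 Hs). pose proof (pos_INR n).
  assert (e * INR n * sqnorm n (shifted m s) <=
    e * INR n * ((2 + 2 * sqnorm n xs) * exp (energy_rate n K * T)))
    by (apply Rmult_le_compat_l; nra).
  assert ((2 * K * INR n + e * INR n) * gap m s <= (2 * K * INR n + INR n + 1) * gap m s)
    by (apply Rmult_le_compat_r; auto; nra).
  lra.
Qed.

Lemma shifted_converges t : forall i, (i < n)%nat -> Un_cv (fun m => x (t + tk m) i) (xstar t i).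
Proof.
  intros i Hi ep Hep.
  set (T := Rabs t).
  set (c := 2 * K * INR n + INR n + 1).
  assert (Hc : 0 < c) by (unfold c; pose proof (pos_INR n); nra).
  set (G := exp (c * T)).
  assert (HG : 0 < G) by apply exp_pos.
  set (Ymax := (2 + 2 * sqnorm n xs) * exp (energy_rate n K * T)).
  assert (HY : 0 <= INR n * Ymax).
  { unfold Ymax. pose proof (exp_pos (energy_rate n K * T)). pose proof (sqnorm_nonneg n xs).
    pose proof (pos_INR n). apply Rmult_le_pos; nra. }
  assert (Hep2 : 0 < ep * ep) by nra.
  set (e := Rmin 1 (c * (ep * ep) / (4 * G * (INR n * Ymax + 1)))).
  assert (He : 0 < e) by (apply Rmin_glb_lt; [lra| apply Rdiv_lt_0_compat; nra]).
  assert (He1 : e <= 1) by apply Rmin_l.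
  set (eta := e * INR n * Ymax).
  assert (Heta : eta / c <= ep * ep / (4 * G))
    by (unfold eta; rewrite Rmult_assoc;
        apply (error_budget e c G (INR n * Ymax)); auto; try lra; apply Rmin_r).
  assert (Heta0 : 0 <= eta / c) by (apply Rdiv_le_0_compat; [unfold eta; nra| lra]).
  destruct (Hunif (- T) T e He) as [N1 HN1].
  destruct (sqnorm_cv n (fun m i => x (tk m) i) xs Hcv (Rmin 1 (ep * ep / (2 * G)))) as [N2 HN2].
  { apply Rmin_glb_lt; [lra| apply Rdiv_lt_0_compat; lra]. }
  exists (Nat.max N1 N2). intros m Hm.
  specialize (HN2 m ltac:(lia)). unfold R_dist in HN2. rewrite Rminus_0_r, <- gap_at_0 in HN2.
  rewrite Rabs_pos_eq in HN2 by apply sqnorm_nonneg.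
  assert (W0a : gap m 0 < 1) by (eapply Rlt_le_trans; [exact HN2| apply Rmin_l]).
  assert (W0b : gap m 0 < ep * ep / (2 * G)) by (eapply Rlt_le_trans; [exact HN2| apply Rmin_r]).
  assert (Wt : gap m t + eta / c <= (gap m 0 + eta / c) * G).
  { apply (gronwall_two_sided (gap m) (gap_slope m) c eta t Hc).
    - intros s _. apply gap_deriv.
    - intros s Hs. apply (gap_slope_bound m T e s); auto.
      intros j l Hj Hl. apply HN1; auto; [lia|]. unfold T in *.
      revert Hs; unfold Rabs; destruct Rcase_abs; intros; lra. }
  assert (WtB : gap m t < ep * ep).
  { assert (HH : (gap m 0 + eta / c) * G < (ep * ep / (2 * G) + ep * ep / (4 * G)) * G)
      by (apply Rmult_lt_compat_r; auto; lra).
    replace ((ep * ep / (2 * G) + ep * ep / (4 * G)) * G) with (3 / 4 * (ep * ep)) in HH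
      by (field; lra).
    lra. }
  unfold R_dist. apply (abs_lt_of_sqnorm_lt n (fun i => x (t + tk m) i - xstar t i)); auto; lra.
Qed.
End ContinuousDependence.

Lemma le_of_approx b U : (forall e, 0 < e -> exists a, a <= U /\ Rabs (a - b) < e) -> b <= U.
Proof.
  intros H. apply Rnot_lt_le; intro Hl. destruct (H (b - U)) as [a [Ha Hab]]; [lra|].
  revert Hab; unfold Rabs; destruct Rcase_abs; intros; lra.
Qed.

Lemma ge_of_approx b L : (forall e, 0 < e -> exists a, L <= a /\ Rabs (a - b) < e) -> L <= b.
Proof.
  intros H. apply Rnot_lt_le; intro Hl. destruct (H (L - b)) as [a [Ha Hab]]; [lra|].
  revert Hab; unfold Rabs; destruct Rcase_abs; intros; lra.
Qed.

Lemma zero_of_approx b : (forall e, 0 < e -> Rabs b < e) -> b = 0.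
Proof.
  intro H. destruct (Req_dec b 0); auto. exfalso. pose proof (Rabs_pos_lt b H0).
  specialize (H (Rabs b) H1). lra.
Qed.

Section LimitMatrix.
Variables (n : nat) (A Astar : R -> nat -> nat -> R) (tk : nat -> R).
Hypothesis Hunif : forall a b e, 0 < e -> exists N : nat, forall k, (N <= k)%nat ->
  forall t i j, a <= t <= b -> (i < n)%nat -> (j < n)%nat ->
    Rabs (A (t + tk k) i j - Astar t i j) < e.

Lemma limit_pointwise t i j : (i < n)%nat -> (j < n)%nat -> forall e, 0 < e ->
  exists N, Rabs (A (t + tk N) i j - Astar t i j) < e.
Proof.
  intros Hi Hj e He. destruct (Hunif t t e He) as [N HN]. exists N. apply (HN N); auto; lra.
Qed.

Lemma limit_tridiagonal : tridiagonal n A -> tridiagonal n Astar.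
Proof.
  intros Htri t i j Hi Hj H. apply zero_of_approx. intros e He.
  destruct (limit_pointwise t i j Hi Hj e He) as [N HN].
  rewrite Htri, Rminus_0_l, Rabs_Ropp in HN; auto.
Qed.

Lemma limit_bounded K : (forall t i j, (i < n)%nat -> (j < n)%nat -> Rabs (A t i j) <= K) ->
  forall t i j, (i < n)%nat -> (j < n)%nat -> Rabs (Astar t i j) <= K.
Proof.
  intros HK t i j Hi Hj. apply le_of_approx. intros e He.
  destruct (limit_pointwise t i j Hi Hj e He) as [N HN].
  exists (Rabs (A (t + tk N) i j)). split; [apply HK; auto|].
  eapply Rle_lt_trans; [apply Rabs_triang_inv2|]. auto.
Qed.

Lemma limit_offdiag eps :
  (forall t i, (i + 1 < n)%nat -> eps <= A t i (i + 1)%nat /\ eps <= A t (i + 1)%nat i) ->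
  forall t i, (i + 1 < n)%nat -> eps <= Astar t i (i + 1)%nat /\ eps <= Astar t (i + 1)%nat i.
Proof.
  intros Hoff t i Hi. split; apply ge_of_approx; intros e He.
  - destruct (limit_pointwise t i (i + 1) ltac:(lia) Hi e He) as [N HN].
    exists (A (t + tk N) i (i + 1)%nat). split; auto. apply Hoff; auto.
  - destruct (limit_pointwise t (i + 1) i Hi ltac:(lia) e He) as [N HN].
    exists (A (t + tk N) (i + 1)%nat i). split; auto. apply Hoff; auto.
Qed.
End LimitMatrix.

Lemma solution_never_vanishes n M z K : 0 <= K ->
  (forall t i j, (i < n)%nat -> (j < n)%nat -> Rabs (M t i j) <= K) ->
  is_solution n M z -> forall t0, (exists i, (i < n)%nat /\ z t0 i <> 0) ->
  forall t, exists i, (i < n)%nat /\ z t i <> 0.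
Proof.
  intros HK Hb Hsol t0 Hnz t. apply nonzero_of_sqnorm_pos.
  apply (energy_never_vanishes n M z K HK Hb Hsol t0). apply sqnorm_pos; auto.
Qed.

Lemma sigma_Smin_ge n v : in_Lambda n v -> (forall k, Smax_ge n v k -> Smin_ge n v k) ->
  forall k, (k <= sigma_var n v)%nat <-> Smin_ge n v k.
Proof.
  intros HL HW k. destruct (lambda_pattern_changes n v HL) as [Hc Hchg]. split.
  - intro Hk. apply HW. exists (lambda_pattern v). split; auto. lia.
  - intro HA. specialize (HA _ Hc). lia.
Qed.

(** * The omega-limit solution *)

Section OmegaLimit.
Variables (n : nat) (A Astar : R -> nat -> nat -> R) (x xstar : R -> nat -> R)
  (tk : nat -> R) (K eps : R).
Hypothesis Htri : tridiagonal n A.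
Hypothesis HtriS : tridiagonal n Astar.
Hypothesis HK : 0 <= K.
Hypothesis Hb : forall t i j, (i < n)%nat -> (j < n)%nat -> Rabs (A t i j) <= K.
Hypothesis HbS : forall t i j, (i < n)%nat -> (j < n)%nat -> Rabs (Astar t i j) <= K.
Hypothesis Heps : 0 < eps.
Hypothesis Hoff : forall t i, (i + 1 < n)%nat -> eps <= A t i (i + 1)%nat /\
  eps <= A t (i + 1)%nat i.
Hypothesis HoffS : forall t i, (i + 1 < n)%nat ->
  eps <= Astar t i (i + 1)%nat /\ eps <= Astar t (i + 1)%nat i.
Hypothesis Hsol : is_solution n A x.
Hypothesis HsolS : is_solution n Astar xstar.
Hypothesis Hnz : forall t, exists j, (j < n)%nat /\ x t j <> 0.
Hypothesis HnzS : forall t, exists j, (j < n)%nat /\ xstar t j <> 0.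
Hypothesis Hinf : cv_infty tk \/ cv_infty (fun k => - tk k).
Hypothesis Hcv : forall t i, (i < n)%nat -> Un_cv (fun m => x (t + tk m) i) (xstar t i).

Definition eventually_Smin_ge (k : nat) : Prop :=
  forall t, exists N, forall m, (N <= m)%nat -> Smin_ge n (x (t + tk m)) k.

(** If [S^-(xstar t0) >= k], openness gives [S^-(x (t0 + tk m)) >= k] for
    large [m]; since [S^-(x .)] is nonincreasing and [tk] runs off to
    infinity, every time [t + tk m] eventually lies before such a time. *)
Lemma eventually_of_limit_Smin k t0 : Smin_ge n (xstar t0) k -> eventually_Smin_ge k.
Proof.
  intros HA t. destruct (Smin_ge_open n (xstar t0) k HA) as [eta [Heta Ho]].
  destruct (finite_common_rank n
    (fun i N => forall m, (N <= m)%nat -> Rabs (x (t0 + tk m) i - xstar t0 i) < eta)) as [N0 HN0].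
  - intros i N N' HNN' H m Hm. apply H; lia.
  - intros i Hi. destruct (Hcv t0 i Hi eta Heta) as [N HN]. exists N. intros m Hm. apply HN; lia.
  - assert (HA0 : forall m, (N0 <= m)%nat -> Smin_ge n (x (t0 + tk m)) k).
    { intros m Hm. apply Ho. intros j Hj. apply HN0; auto. }
    pose proof (Smin_ge_backward n A x K eps Htri HK Hb Heps Hoff Hsol Hnz) as Back.
    destruct Hinf as [Hp|Hm].
    + exists 0%nat. intros m _. destruct (Hp (t + tk m - t0)) as [N1 HN1].
      specialize (HN1 (Nat.max N0 N1) ltac:(lia)).
      apply (Back k (t + tk m) (t0 + tk (Nat.max N0 N1))); [lra|]. apply HA0; lia.
    + destruct (Hm (t - t0 - tk N0)) as [N1 HN1]. exists N1. intros m Hm1.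
      specialize (HN1 m Hm1). apply (Back k (t + tk m) (t0 + tk N0)); [lra|]. apply HA0; lia.
Qed.

(** [S^+ >= k] is closed, so it passes to the pointwise limit [xstar t]. *)
Lemma limit_Smax_of_eventually k : eventually_Smin_ge k -> forall t, Smax_ge n (xstar t) k.
Proof.
  intros Hg t. apply (Smax_ge_closed n (fun m => x (t + tk m)) (xstar t) k).
  - intro M0. destruct (Hg t) as [N HN]. exists (Nat.max M0 N). split; [lia|].
    apply Smin_Smax_ge. apply HN; lia.
  - intros j Hj. apply Hcv; auto.
Qed.

(** Combining with the forward drop [S^+(xstar (t + d)) <= S^-(xstar t)]. *)
Lemma limit_Smin_of_eventually k : eventually_Smin_ge k -> forall t, Smin_ge n (xstar t) k.
Proof.
  intros Hg t.
  destruct (forward_drop_at n Astar xstar K eps HtriS HK HbS Heps HoffS HsolS HnzS t)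
    as [d [Hd Hf]].
  apply (Hf (t + d)); [lra|]. apply limit_Smax_of_eventually; auto.
Qed.

(** The backward drop [S^+(xstar t) <= S^-(xstar (t - d))] closes the circle. *)
Lemma eventually_of_limit_Smax k t : Smax_ge n (xstar t) k -> eventually_Smin_ge k.
Proof.
  intros HW.
  destruct (backward_drop_at n Astar xstar K eps HtriS HK HbS Heps HoffS HsolS HnzS t)
    as [d [Hd Hb']].
  apply (eventually_of_limit_Smin k (t - d)). apply (Hb' (t - d)); auto; lra.
Qed.

Lemma limit_Smax_Smin t k : Smax_ge n (xstar t) k -> Smin_ge n (xstar t) k.
Proof. intros HW. exact (limit_Smin_of_eventually k (eventually_of_limit_Smax k t HW) t). Qed.

Lemma limit_Smin_constant t s k : Smin_ge n (xstar t) k -> Smin_ge n (xstar s) k.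
Proof. intros HA. exact (limit_Smin_of_eventually k (eventually_of_limit_Smin k t HA) s). Qed.

Lemma limit_in_Lambda t : in_Lambda n (xstar t).
Proof.
  apply in_Lambda_of_changes_unique; auto. apply changes_unique. apply limit_Smax_Smin.
Qed.

Lemma limit_sigma_constant t : sigma_var n (xstar t) = sigma_var n (xstar 0).
Proof.
  pose proof (sigma_Smin_ge n _ (limit_in_Lambda t) (limit_Smax_Smin t)) as St.
  pose proof (sigma_Smin_ge n _ (limit_in_Lambda 0) (limit_Smax_Smin 0)) as S0.
  apply Nat.le_antisymm.
  - apply S0, (limit_Smin_constant t), St; lia.
  - apply St, (limit_Smin_constant 0), S0; lia.
Qed.
End OmegaLimit.

(** Lemma 2.5.  The matrix hypotheses pass to [Astar], neither solution
    vanishes, the translates of [x] converge to [xstar], and the omega-limit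
    argument applies. *)
Theorem lemma2p5
  (n : nat) (A : R -> nat -> nat -> R) (eps0 : R)
  (x : R -> nat -> R) (tk : nat -> R) (xs : nat -> R)
  (Astar : R -> nat -> nat -> R) (xstar : R -> nat -> R) :
  (* tridiagonal *)
  (forall t i j, (i < n)%nat -> (j < n)%nat -> (i + 1 < j \/ j + 1 < i)%nat ->
     A t i j = 0) ->
  (* bounded entries *)
  (exists M, forall t i j, (i < n)%nat -> (j < n)%nat -> Rabs (A t i j) <= M) ->
  (* uniformly continuous entries *)
  (forall i j, (i < n)%nat -> (j < n)%nat ->
     forall eps, 0 < eps -> exists delta, 0 < delta /\
       forall s t, Rabs (s - t) < delta -> Rabs (A s i j - A t i j) < eps) ->
  (* off-diagonal lower bound *)
  0 < eps0 ->
  (forall t i, (i + 1 < n)%nat -> eps0 <= A t i (i + 1)%nat /\ eps0 <= A t (i + 1)%nat i) ->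
  (* x is a nontrivial solution of x' = A(t) x *)
  is_solution n A x ->
  (exists t i, (i < n)%nat /\ x t i <> 0) ->
  (* t_k -> +oo or t_k -> -oo *)
  (cv_infty tk \/ cv_infty (fun k => - tk k)) ->
  (* x(t_k) -> x_* <> 0 *)
  (forall i, (i < n)%nat -> Un_cv (fun k => x (tk k) i) (xs i)) ->
  (exists i, (i < n)%nat /\ xs i <> 0) ->
  (* A(. + t_k) -> A_* uniformly on compact intervals *)
  (forall a b eps, 0 < eps -> exists N : nat, forall k, (N <= k)%nat ->
     forall t i j, a <= t <= b -> (i < n)%nat -> (j < n)%nat ->
       Rabs (A (t + tk k) i j - Astar t i j) < eps) ->
  (* x_*(t) solves x' = A_*(t) x with x_*(0) = x_* *)
  is_solution n Astar xstar ->
  (forall i, (i < n)%nat -> xstar 0 i = xs i) ->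
  (forall t, in_Lambda n (xstar t)) /\
  (exists c : nat, forall t, sigma_var n (xstar t) = c).
Proof.
  intros Htri [M HM] _ Heps0 Hoff Hsol [t1 Hnz1] Hinf Hcv [i0 [Hi0 Hxs]] Hunif HsolS Hx0.
  assert (HM0 : 0 <= M).
  { pose proof (HM 0 0%nat 0%nat ltac:(lia) ltac:(lia)). pose proof (Rabs_pos (A 0 0%nat 0%nat)).
    lra. }
  pose proof (limit_tridiagonal n A Astar tk Hunif Htri) as HtriS.
  pose proof (limit_bounded n A Astar tk Hunif M HM) as HMS.
  pose proof (limit_offdiag n A Astar tk Hunif eps0 Hoff) as HoffS.
  pose proof (solution_never_vanishes n A x M HM0 HM Hsol t1 Hnz1) as Hnz.
  assert (HnzS : forall t, exists j, (j < n)%nat /\ xstar t j <> 0).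
  { apply (solution_never_vanishes n Astar xstar M HM0 HMS HsolS 0).
    exists i0. rewrite Hx0; auto. }
  pose proof (shifted_converges n A Astar x xstar tk xs M HM0 HM HMS Hsol HsolS Hcv Hx0 Hunif)
    as Hshift.
  split.
  - exact (limit_in_Lambda n A Astar x xstar tk M eps0 Htri HtriS HM0 HM HMS Heps0 Hoff HoffS
      Hsol HsolS Hnz HnzS Hinf Hshift).
  - exists (sigma_var n (xstar 0)).
    exact (limit_sigma_constant n A Astar x xstar tk M eps0 Htri HtriS HM0 HM HMS Heps0 Hoff
      HoffS Hsol HsolS Hnz HnzS Hinf Hshift).
Qed.
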